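(* Let $H$ be a Hilbert space, $\gamma>0$, $L\ge 1$ an integer, and let $A,A_1,\dots,A_L$ be compact operators on $H$ with $A=\sum_{k=1}^L A_k$. Suppose the family $\{A_k\}$ is asymptotically orthogonal, i.e. $$A_k^*A_j\in\Sigma^0_{2\gamma}\quad\text{and}\quad A_kA_j^*\in\Sigma^0_{2\gamma}\qquad\text{for all } j\neq k,\ j,k=1,\dots,L.$$ Then $$\Delta_\gamma(A)=\limsup_{s\to0+}s^{1/\gamma}\log\Big(\sum_{k=1}^L\tilde n(s,A_k)\Big),\qquad \delta_\gamma(A)=\liminf_{s\to0+}s^{1/\gamma}\log\Big(\sum_{k=1}^L\tilde n(s,A_k)\Big).$$
   Context: For a compact operator $A$ with singular values $s_n(A)$ ($n\ge1$, non-increasing, with multiplicity), the counting function is $n(s,A)=\#\{n: s_n(A)>s\}$, $s>0$, and the shifted counting function is $\tilde n(s,A)=n(s,A)+2$. For $\beta>0$, $\Sigma^0_\beta$ denotes the class of compact operators $A$ with $s_n(A)=o\big((\log(n+1))^{-\beta}\big)$ as $n\to\infty$. For a compact operator $A$ and $\gamma>0$, $\Delta_\gamma(A)=\limsup_{s\to0+}s^{1/\gamma}\log\tilde n(s,A)$ and $\delta_\gamma(A)=\liminf_{s\to0+}s^{1/\gamma}\log\tilde n(s,A)$. *)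

From Stdlib Require Import Reals.
From Coquelicot Require Import Coquelicot.
Open Scope R_scope.

Record Hilbert := {
  hcarrier :> Type;
  h0 : hcarrier;
  hadd : hcarrier -> hcarrier -> hcarrier;
  hopp : hcarrier -> hcarrier;
  hscal : C -> hcarrier -> hcarrier;
  hinner : hcarrier -> hcarrier -> C;
  hadd_assoc : forall x y z, hadd x (hadd y z) = hadd (hadd x y) z;
  hadd_comm : forall x y, hadd x y = hadd y x;
  hadd_0 : forall x, hadd h0 x = x;
  hadd_opp : forall x, hadd x (hopp x) = h0;
  hscal_1 : forall x, hscal (RtoC 1) x = x;
  hscal_assoc : forall a b x, hscal a (hscal b x) = hscal (Cmult a b) x;
  hscal_distr_l : forall a x y, hscal a (hadd x y) = hadd (hscal a x) (hscal a y);
  hscal_distr_r : forall a b x, hscal (Cplus a b) x = hadd (hscal a x) (hscal b x);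
  hinner_add : forall x y z, hinner (hadd x y) z = Cplus (hinner x z) (hinner y z);
  hinner_scal : forall a x y, hinner (hscal a x) y = Cmult a (hinner x y);
  hinner_conj : forall x y, hinner y x = Cconj (hinner x y);
  hinner_pos : forall x, 0 <= Re (hinner x x);
  hinner_def : forall x, hinner x x = RtoC 0 -> x = h0;
  hcomplete : forall u : nat -> hcarrier,
    (forall eps, 0 < eps -> exists N, forall m n, (N <= m)%nat -> (N <= n)%nat ->
        sqrt (Re (hinner (hadd (u m) (hopp (u n))) (hadd (u m) (hopp (u n))))) < eps) ->
    exists l, forall eps, 0 < eps -> exists N, forall n, (N <= n)%nat ->
        sqrt (Re (hinner (hadd (u n) (hopp l)) (hadd (u n) (hopp l)))) < eps
}.

Section Ops.
Variable H : Hilbert.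

Definition hnorm (x : H) : R := sqrt (Re (hinner H x x)).
Definition hsub (x y : H) : H := hadd H x (hopp H y).

Fixpoint hsum (n : nat) (f : nat -> H) : H :=
  match n with O => h0 H | S m => hadd H (hsum m f) (f m) end.

Definition is_linear (A : H -> H) : Prop :=
  (forall x y, A (hadd H x y) = hadd H (A x) (A y)) /\
  (forall a x, A (hscal H a x) = hscal H a (A x)).

Definition is_compact_op (A : H -> H) : Prop :=
  is_linear A /\
  forall u : nat -> H, (exists M, forall n, hnorm (u n) <= M) ->
    exists (phi : nat -> nat) (l : H),
      (forall n, (phi n < phi (S n))%nat) /\
      (forall eps, 0 < eps -> exists N, forall n, (N <= n)%nat ->
          hnorm (hsub (A (u (phi n))) l) < eps).

Definition is_adjoint (A B : H -> H) : Prop :=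
  forall x y, hinner H (A x) y = hinner H x (B y).

Definition lin_indep (k : nat) (v : nat -> H) : Prop :=
  forall c : nat -> C, hsum k (fun i => hscal H (c i) (v i)) = h0 H ->
    forall i, (i < k)%nat -> c i = RtoC 0.

(** v is an eigenvector of A^*A with eigenvalue lam:  A^*A v = lam v,
    written through <A^*A v, y> = <A v, A y> for all y. *)
Definition eigvec_AstarA (A : H -> H) (lam : R) (v : H) : Prop :=
  forall y, hinner H (A v) (A y) = Cmult (RtoC lam) (hinner H v y).

(** counting function n(s,A) = #{n : s_n(A) > s}: the number (with
    multiplicity) of eigenvalues of |A| = (A^*A)^{1/2} exceeding s, i.e. the
    dimension of the span of the eigenspaces of A^*A for eigenvalues > s^2,
    i.e. the largest number of linearly independent such eigenvectors. *)
Definition ncount (s : R) (A : H -> H) : R :=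
  real (Lub_Rbar (fun x => exists k : nat, x = INR k /\
     exists v : nat -> H, lin_indep k v /\
       forall i, (i < k)%nat -> exists lam, s ^ 2 < lam /\ eigvec_AstarA A lam (v i))).

Definition ntilde (s : R) (A : H -> H) : R := ncount s A + 2.

(** singular values: s_n(A) = inf { s > 0 : n(s,A) < n }  (n >= 1) *)
Definition sval (n : nat) (A : H -> H) : R :=
  real (Glb_Rbar (fun s => 0 < s /\ ncount s A < INR n)).

Definition Sigma0 (beta : R) (A : H -> H) : Prop :=
  is_compact_op A /\
  forall eps, 0 < eps -> exists N, forall n, (N <= n)%nat ->
    Rabs (sval n A) <= eps * Rpower (ln (INR n + 1)) (- beta).

End Ops.

Definition limsup0 (f : R -> R) : Rbar :=
  Glb_Rbar (fun y => exists d, 0 < d /\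
     Rbar_le (Lub_Rbar (fun x => exists s, 0 < s < d /\ x = f s)) (Finite y)).
Definition liminf0 (f : R -> R) : Rbar :=
  Lub_Rbar (fun y => exists d, 0 < d /\
     Rbar_le (Finite y) (Glb_Rbar (fun x => exists s, 0 < s < d /\ x = f s))).

Fixpoint rsum (n : nat) (f : nat -> R) : R :=
  match n with O => 0 | S m => rsum m f + f m end.

Definition Delta_gamma (H : Hilbert) (gamma : R) (A : H -> H) : Rbar :=
  limsup0 (fun s => Rpower s (/ gamma) * ln (ntilde H s A)).
Definition delta_gamma (H : Hilbert) (gamma : R) (A : H -> H) : Rbar :=
  liminf0 (fun s => Rpower s (/ gamma) * ln (ntilde H s A)).

From Stdlib Require Import Reals Lra Lia Psatz List Classical ClassicalEpsilon FunctionalExtensionality.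
From Coquelicot Require Import Coquelicot.
Open Scope R_scope.

(* n(s,T) is the number of eigenvalues of T^*T above s^2, so by the min-max principle
   it moves by at most k when T^*T is perturbed by an operator that is small off a
   subspace of dimension k.  Compare A with the column operator B x = (A_1 x, ..., A_L x)
   into H^L: |A x|^2 - |B x|^2 is the sum of the cross terms <A_k^* A_j x, x> (k <> j),
   which is at most 2 L^2 d |x|^2 off the span of the eigenvectors of the A_k^* A_j with
   singular values above d; likewise B B^* is block-diagonal with blocks A_k A_k^* up to
   the off-diagonal blocks A_k A_j^*, and n(s,B) = n(s,B^* ).  Hence n(s,A) and
   sum_k n(s',A_k) dominate each other up to E(d), the number of singular values of the
   cross terms above d, whenever s^2 and s'^2 differ by 4 L^2 d.  Taking d = eta s^2, the
   hypothesis A_k^* A_j, A_k A_j^* in Sigma^0_{2 gamma} gives log E(eta s^2) = o(s^{-1/gamma}),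
   and the rescaling s' = kappa s with kappa -> 1 changes s^{1/gamma} log by a factor
   tending to 1. *)

(** * Inner-product spaces *)

(* Only positive semidefinite: the direct sum H^L below is modelled on all of
   [nat -> H], where vectors supported outside [0, L) have norm zero. *)
Record InnerSpace := {
  icarrier :> Type; vzero : icarrier; vadd : icarrier -> icarrier -> icarrier; vopp : icarrier -> icarrier;
  vscal : C -> icarrier -> icarrier; inner : icarrier -> icarrier -> C;
  vadd_assoc : forall x y z, vadd x (vadd y z) = vadd (vadd x y) z;
  vadd_comm : forall x y, vadd x y = vadd y x;
  vadd_0l : forall x, vadd vzero x = x;
  vadd_opp : forall x, vadd x (vopp x) = vzero;
  vscal_1 : forall x, vscal (RtoC 1) x = x;
  vscal_assoc : forall a b x, vscal a (vscal b x) = vscal (Cmult a b) x;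
  vscal_distr_l : forall a x y, vscal a (vadd x y) = vadd (vscal a x) (vscal a y);
  vscal_distr_r : forall a b x, vscal (Cplus a b) x = vadd (vscal a x) (vscal b x);
  inner_addl : forall x y z, inner (vadd x y) z = Cplus (inner x z) (inner y z);
  inner_scall : forall a x y, inner (vscal a x) y = Cmult a (inner x y);
  inner_conj : forall x y, inner y x = Cconj (inner x y);
  inner_self_re_ge0 : forall x, 0 <= Re (inner x x) }.

Definition of_Hilbert (H : Hilbert) : InnerSpace :=
  Build_InnerSpace H (h0 H) (hadd H) (hopp H) (hscal H) (hinner H)
   (hadd_assoc H) (hadd_comm H) (hadd_0 H) (hadd_opp H) (hscal_1 H) (hscal_assoc H)
   (hscal_distr_l H) (hscal_distr_r H) (hinner_add H) (hinner_scal H) (hinner_conj H)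
   (hinner_pos H).

Fixpoint csum (n : nat) (f : nat -> C) : C :=
  match n with O => RtoC 0 | S m => Cplus (csum m f) (f m) end.

Lemma C_eq (a b : C) : fst a = fst b -> snd a = snd b -> a = b.
Proof. destruct a, b; simpl; intros; subst; auto. Qed.

Ltac solve_C := repeat match goal with z : C |- _ => destruct z end;
  apply C_eq; simpl; try ring.

Lemma csum_ext n f g : (forall i, (i < n)%nat -> f i = g i) -> csum n f = csum n g.
Proof.
  induction n; simpl; intros Hfg. auto. rewrite (Hfg n) by lia. rewrite IHn. auto. intros; apply Hfg; lia.
Qed.

Lemma csum_add n f g : csum n (fun i => Cplus (f i) (g i)) = Cplus (csum n f) (csum n g).
Proof.
  induction n; simpl. solve_C. rewrite IHn. generalize (csum n f) (csum n g) (f n) (g n). intros; solve_C.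
Qed.

Lemma csum_scal n c f : csum n (fun i => Cmult c (f i)) = Cmult c (csum n f).
Proof. induction n; simpl. solve_C. rewrite IHn. generalize (csum n f) (f n). intros; solve_C. Qed.

Lemma csum_conj n f : csum n (fun i => Cconj (f i)) = Cconj (csum n f).
Proof. induction n; simpl. solve_C. rewrite IHn. generalize (csum n f) (f n). intros; solve_C. Qed.

Lemma re_csum n f : Re (csum n f) = rsum n (fun i => Re (f i)).
Proof. induction n; simpl; auto. rewrite <- IHn. auto. Qed.

Lemma csum_zero n : csum n (fun _ => RtoC 0) = RtoC 0.
Proof. induction n; simpl; auto. rewrite IHn. solve_C. Qed.

Lemma csum_single n k g : (k < n)%nat -> csum n (fun j => if Nat.eqb j k then g j else RtoC 0) = g k.
Proof.
  induction n; intros Hk. lia. simpl. destruct (Nat.eq_dec k n).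
  - subst. rewrite Nat.eqb_refl.
    rewrite (csum_ext n _ (fun _ => RtoC 0)). rewrite csum_zero. generalize (g n); intros; solve_C.
    intros i Hi. replace (Nat.eqb i n) with false; auto. symmetry; apply Nat.eqb_neq; lia.
  - replace (Nat.eqb n k) with false by (symmetry; apply Nat.eqb_neq; lia). rewrite IHn by lia.
    generalize (g k); intros; solve_C.
Qed.

Section InnerSpaceTheory.
Variable X : InnerSpace.
Notation "x +v y" := (vadd X x y) (at level 50, left associativity).
Notation "c · x" := (vscal X c x) (at level 40).
Notation "<< x , y >>" := (inner X x y).
Notation "0v" := (vzero X).

Fixpoint vsum (n : nat) (f : nat -> X) : X :=
  match n with O => vzero X | S m => vadd X (vsum m f) (f m) end.

Definition vsub (x y : X) := vadd X x (vopp X y).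
Definition sqnorm (x : X) := Re (inner X x x).
Definition vnorm (x : X) := sqrt (sqnorm x).

Lemma vadd_0r x : x +v 0v = x.
Proof. rewrite vadd_comm; apply vadd_0l. Qed.

Lemma vadd_cancel x y z : x +v y = x +v z -> y = z.
Proof.
  intro E. assert (E2 : vopp X x +v (x +v y) = vopp X x +v (x +v z)) by (rewrite E; auto).
  rewrite !vadd_assoc, (vadd_comm X (vopp X x) x), vadd_opp, !vadd_0l in E2. exact E2.
Qed.

Lemma vscal_0l x : (RtoC 0) · x = 0v.
Proof.
  apply (vadd_cancel ((RtoC 0) · x)). rewrite <- vscal_distr_r, vadd_0r.
  f_equal. solve_C.
Qed.

Lemma vscal_0r c : c · 0v = 0v.
Proof.
  rewrite <- (vscal_0l 0v) at 1. rewrite vscal_assoc.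
  replace (Cmult c (RtoC 0)) with (RtoC 0) by solve_C. apply vscal_0l.
Qed.

Lemma vopp_eq_scal x : vopp X x = (RtoC (-1)) · x.
Proof.
  apply (vadd_cancel x). rewrite vadd_opp.
  transitivity ((RtoC 1) · x +v (RtoC (-1)) · x). 2: rewrite vscal_1; auto.
  rewrite <- vscal_distr_r.
  replace (Cplus (RtoC 1) (RtoC (-1))) with (RtoC 0) by solve_C. rewrite vscal_0l; auto.
Qed.

Lemma inner_0l y : << 0v, y >> = RtoC 0.
Proof. rewrite <- (vscal_0l 0v), inner_scall. solve_C. Qed.

Lemma inner_0r y : << y, 0v >> = RtoC 0.
Proof. rewrite inner_conj, inner_0l. solve_C. Qed.

Lemma inner_addr x y z : << x, y +v z >> = Cplus << x, y >> << x, z >>.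
Proof. rewrite inner_conj, inner_addl, Cplus_conj, <- !inner_conj. auto. Qed.

Lemma inner_scalr c x y : << x, c · y >> = Cmult (Cconj c) << x, y >>.
Proof. rewrite inner_conj, inner_scall, Cmult_conj, <- inner_conj. auto. Qed.

Lemma inner_oppl x y : << vopp X x, y >> = Copp << x, y >>.
Proof. rewrite vopp_eq_scal, inner_scall. solve_C. Qed.

Lemma inner_oppr x y : << x, vopp X y >> = Copp << x, y >>.
Proof. rewrite vopp_eq_scal, inner_scalr. solve_C. Qed.

Lemma inner_sum_l n f y : << vsum n f, y >> = csum n (fun i => << f i, y >>).
Proof. induction n; simpl. apply inner_0l. rewrite inner_addl, IHn; auto. Qed.

Lemma inner_sum_r n f y : << y, vsum n f >> = csum n (fun i => << y, f i >>).
Proof. induction n; simpl. apply inner_0r. rewrite inner_addr, IHn; auto. Qed.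

Lemma im_inner_self x : Im << x, x >> = 0.
Proof.
  pose proof (inner_conj X x x) as E. destruct (inner X x x) as [a b].
  unfold Cconj in E; simpl in *. injection E. intros; lra.
Qed.

Lemma inner_self_real x : << x, x >> = RtoC (sqnorm x).
Proof. unfold sqnorm. pose proof (im_inner_self x). destruct (inner X x x); apply C_eq; simpl in *; auto. Qed.

Lemma sqnorm_ge0 x : 0 <= sqnorm x.
Proof. apply inner_self_re_ge0. Qed.

Lemma re_inner_sym x y : Re << x, y >> = Re << y, x >>.
Proof. rewrite (inner_conj X x y). destruct (inner X x y); simpl; auto. Qed.

Lemma sqnorm_add x y : sqnorm (x +v y) = sqnorm x + sqnorm y + 2 * Re << x, y >>.
Proof.
  unfold sqnorm. rewrite inner_addl, !inner_addr. rewrite !re_plus. rewrite (re_inner_sym y x). ring.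
Qed.

Lemma sqnorm_scal c x : sqnorm (c · x) = (Re c ^ 2 + Im c ^ 2) * sqnorm x.
Proof.
  unfold sqnorm. rewrite inner_scall, inner_scalr. pose proof (im_inner_self x).
  destruct (inner X x x), c; simpl in *. subst. ring.
Qed.

Lemma sqnorm_opp x : sqnorm (vopp X x) = sqnorm x.
Proof. rewrite vopp_eq_scal, sqnorm_scal. simpl. ring. Qed.

Lemma re_inner_scall_real (r : R) x y : Re << (RtoC r) · x, y >> = r * Re << x, y >>.
Proof. rewrite inner_scall. destruct (inner X x y); simpl; ring. Qed.

Lemma re_inner_scalr_real (r : R) x y : Re << x, (RtoC r) · y >> = r * Re << x, y >>.
Proof. rewrite inner_scalr. destruct (inner X x y); simpl; ring. Qed.

Lemma re_inner_le_amgm x y t : 0 < t -> 2 * Re << x, y >> <= t * sqnorm x + sqnorm y / t.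
Proof.
  intro Ht. pose proof (sqnorm_ge0 ((RtoC t) · x +v vopp X y)) as P.
  rewrite sqnorm_add, sqnorm_scal, sqnorm_opp in P. simpl in P.
  rewrite re_inner_scall_real, inner_oppr, re_opp in P.
  assert (t * (2 * Re << x, y >>) <= t * (t * sqnorm x + sqnorm y / t)).
  { field_simplify; try lra. }
  apply Rmult_le_reg_l in H; lra.
Qed.

Lemma re_inner_sq_le x y : Re << x, y >> ^ 2 <= sqnorm x * sqnorm y.
Proof.
  destruct (Req_dec (sqnorm y) 0) as [Hy|Hy].
  - destruct (Req_dec (Re << x, y >>) 0) as [Hr|Hr].
    + rewrite Hr, Hy. lra.
    + exfalso. set (r := Re << x, y >>) in *.
      pose proof (sqnorm_ge0 (x +v (RtoC (-(sqnorm x + 1)/(2*r))) · y)) as P.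
      rewrite sqnorm_add, sqnorm_scal, re_inner_scalr_real, Hy in P. simpl in P. fold r in P.
      rewrite Rmult_0_r in P.
      replace (2 * (- (sqnorm x + 1) / (2 * r) * r)) with (-(sqnorm x + 1)) in P by (field; auto). lra.
  - pose proof (sqnorm_ge0 y). set (r := Re << x, y >>) in *.
    pose proof (sqnorm_ge0 (x +v (RtoC (- r / sqnorm y)) · y)) as P.
    rewrite sqnorm_add, sqnorm_scal, re_inner_scalr_real in P. simpl in P. fold r in P.
    assert (0 <= sqnorm x - r^2 / sqnorm y).
    { replace (sqnorm x - r^2 / sqnorm y) with
        (sqnorm x + ((- r / sqnorm y) ^ 2 + 0 ^ 2) * sqnorm y + 2 * (- r / sqnorm y * r)) by (field; auto).
      exact P. }
    assert (0 <= (sqnorm x - r^2 / sqnorm y) * sqnorm y) by (apply Rmult_le_pos; lra).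
    replace ((sqnorm x - r^2 / sqnorm y) * sqnorm y) with (sqnorm x * sqnorm y - r^2) in H1 by (field; auto).
    lra.
Qed.

Lemma vnorm_ge0 x : 0 <= vnorm x.
Proof. apply sqrt_pos. Qed.

Lemma vnorm_sq x : vnorm x * vnorm x = sqnorm x.
Proof. apply sqrt_sqrt, sqnorm_ge0. Qed.

Lemma re_inner_le x y : Re << x, y >> <= vnorm x * vnorm y.
Proof.
  pose proof (re_inner_sq_le x y). pose proof (vnorm_ge0 x). pose proof (vnorm_ge0 y).
  rewrite <- (vnorm_sq x), <- (vnorm_sq y) in H.
  set (r := Re << x, y >>) in *. set (a := vnorm x) in *. set (b := vnorm y) in *.
  assert (0 <= a * b) by nra.
  destruct (Rle_dec r (a*b)); auto. exfalso.
  assert (a * b * (a * b) < r * r) by (apply Rmult_le_0_lt_compat; lra). nra.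
Qed.

Lemma vnorm_triangle x y : vnorm (x +v y) <= vnorm x + vnorm y.
Proof.
  unfold vnorm at 1. rewrite sqnorm_add. pose proof (re_inner_le x y).
  rewrite <- (vnorm_sq x), <- (vnorm_sq y).
  pose proof (vnorm_ge0 x). pose proof (vnorm_ge0 y).
  apply Rsqr_incr_0; try apply sqrt_pos; try lra. unfold Rsqr.
  rewrite sqrt_sqrt. nra. pose proof (sqnorm_ge0 (x +v y)). rewrite sqnorm_add in H2.
  rewrite <- (vnorm_sq x), <- (vnorm_sq y) in H2. lra.
Qed.

Lemma Cmod_inner_le x y : Cmod << x, y >> <= vnorm x * vnorm y.
Proof.
  set (z := << x, y >>).
  pose proof (re_inner_le x (z · y)) as P.
  rewrite inner_scalr in P. fold z in P.
  unfold vnorm at 2 in P. rewrite sqnorm_scal in P. fold (vnorm y) in P.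
  assert (E : Re (Cmult (Cconj z) z) = Cmod z ^ 2).
  { rewrite Cmod2_alt. destruct z; simpl; ring. }
  rewrite E in P.
  assert (E2 : sqrt ((Re z ^ 2 + Im z ^ 2) * sqnorm y) = Cmod z * vnorm y).
  { unfold Cmod, vnorm. rewrite sqrt_mult_alt. reflexivity.
    pose proof (pow2_ge_0 (Re z)). pose proof (pow2_ge_0 (Im z)). lra. }
  rewrite E2 in P. pose proof (Cmod_ge_0 z). pose proof (vnorm_ge0 x). pose proof (vnorm_ge0 y).
  destruct (Req_dec (Cmod z) 0). rewrite H2. nra. nra.
Qed.

Lemma vsub_self x : vsub x x = 0v.
Proof. apply vadd_opp. Qed.

Lemma vsub_eq0 u v : vsub u v = 0v -> u = v.
Proof.
  unfold vsub; intro E.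
  rewrite <- (vadd_0l X v), <- E, <- vadd_assoc, (vadd_comm X (vopp X v) v), vadd_opp, vadd_0r. auto.
Qed.

Lemma inner_subl x y z : << vsub x y, z >> = Cminus << x, z >> << y, z >>.
Proof. unfold vsub. rewrite inner_addl, inner_oppl. solve_C. Qed.

Lemma inner_subr x y z : << z, vsub x y >> = Cminus << z, x >> << z, y >>.
Proof. unfold vsub. rewrite inner_addr, inner_oppr. solve_C. Qed.

Lemma sqnorm_sub x y : sqnorm (vsub x y) = sqnorm x + sqnorm y - 2 * Re << x, y >>.
Proof. unfold vsub. rewrite sqnorm_add, sqnorm_opp, inner_oppr, re_opp. ring. Qed.

Lemma vsub_chain x y z : vsub x z = vsub x y +v vsub y z.
Proof.
  unfold vsub. rewrite <- vadd_assoc. f_equal.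
  rewrite vadd_assoc, (vadd_comm X (vopp X y) y), vadd_opp, vadd_0l. auto.
Qed.

Lemma vnorm_sub_triangle x y z : vnorm (vsub x z) <= vnorm (vsub x y) + vnorm (vsub y z).
Proof. rewrite (vsub_chain x y z). apply vnorm_triangle. Qed.

Lemma vnorm_sub_sym x y : vnorm (vsub x y) = vnorm (vsub y x).
Proof. unfold vnorm. rewrite !sqnorm_sub, re_inner_sym. f_equal; ring. Qed.

Lemma vnorm_diff_le x y : Rabs (vnorm x - vnorm y) <= vnorm (vsub x y).
Proof.
  assert (E1 : x = vsub x y +v y).
  { unfold vsub. rewrite <- vadd_assoc, (vadd_comm X (vopp X y) y), vadd_opp, vadd_0r; auto. }
  assert (E2 : y = vsub y x +v x).
  { unfold vsub. rewrite <- vadd_assoc, (vadd_comm X (vopp X x) x), vadd_opp, vadd_0r; auto. }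
  pose proof (vnorm_triangle (vsub x y) y). rewrite <- E1 in H.
  pose proof (vnorm_triangle (vsub y x) x). rewrite <- E2 in H0.
  rewrite (vnorm_sub_sym y x) in H0. apply Rabs_le; lra.
Qed.

Lemma vnorm_scal_real (r : R) x : vnorm ((RtoC r) · x) = Rabs r * vnorm x.
Proof.
  unfold vnorm. rewrite sqnorm_scal. simpl Re; simpl Im. rewrite sqrt_mult_alt. f_equal.
  replace (r ^ 2 + 0 ^ 2) with (Rsqr r) by (unfold Rsqr; ring). apply sqrt_Rsqr_abs.
  nra.
Qed.

Lemma vscal_sub (r : C) x y : vsub (r · x) (r · y) = r · (vsub x y).
Proof. unfold vsub. rewrite vscal_distr_l, !vopp_eq_scal, !vscal_assoc. f_equal. f_equal. solve_C. Qed.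

End InnerSpaceTheory.

(** * Spans and linear independence of finite families *)

Section Span.
Variable X : InnerSpace.
Notation "x +v y" := (vadd X x y) (at level 50, left associativity).
Notation "c · x" := (vscal X c x) (at level 40).
Notation "<< x , y >>" := (inner X x y).
Notation "0v" := (vzero X).

Fixpoint lincomb (l : list X) (c : nat -> C) : X :=
  match l with nil => 0v | u :: t => c O · u +v lincomb t (fun i => c (S i)) end.

Definition in_span (l : list X) (x : X) := exists c, x = lincomb l c.
(* Independence modulo null vectors; in a degenerate space this is stronger than
   [lincomb l c = 0 -> c = 0]. *)
Definition indep (l : list X) := forall c, sqnorm X (lincomb l c) = 0 -> forall i, (i < length l)%nat ->
  c i = RtoC 0.
Definition orth_to (F : list X) (x : X) := forall f, In f F -> << x, f >> = RtoC 0.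

Lemma vadd_ACA a b c d : (a +v b) +v (c +v d) = (a +v c) +v (b +v d).
Proof.
  rewrite <- !vadd_assoc. f_equal. rewrite !vadd_assoc. f_equal. apply vadd_comm.
Qed.

Lemma lincomb_ext l c d : (forall i, (i < length l)%nat -> c i = d i) -> lincomb l c = lincomb l d.
Proof.
  revert c d; induction l; simpl; intros; auto.
  rewrite (H O) by lia. f_equal. apply IHl. intros; apply H; lia.
Qed.

Lemma lincomb_zero l : lincomb l (fun _ => RtoC 0) = 0v.
Proof. induction l; simpl; auto. rewrite IHl, vscal_0l, vadd_0l; auto. Qed.

Lemma lincomb_add l c d : lincomb l c +v lincomb l d = lincomb l (fun i => Cplus (c i) (d i)).
Proof.
  revert c d; induction l; simpl; intros. apply vadd_0l.
  rewrite vadd_ACA, IHl, vscal_distr_r. auto.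
Qed.

Lemma lincomb_scal a l c : a · lincomb l c = lincomb l (fun i => Cmult a (c i)).
Proof.
  revert c; induction l; simpl; intros. apply vscal_0r.
  rewrite vscal_distr_l, IHl, vscal_assoc. auto.
Qed.

Lemma lincomb_app l1 l2 c : lincomb (l1 ++ l2) c = lincomb l1 c +v lincomb l2 (fun i => c (length l1 + i)%nat).
Proof.
  revert c; induction l1; simpl; intros. rewrite vadd_0l; auto.
  rewrite IHl1, vadd_assoc. auto.
Qed.

Fixpoint lincomb_coef (l : list X) (c : nat -> C) (b : X -> C) : C :=
  match l with nil => RtoC 0 | u :: t => Cplus (Cmult (c O) (b u)) (lincomb_coef t (fun i => c (S i)) b) end.

Lemma lincomb_shift l c b p :
  lincomb (map (fun u => u +v (b u) · p) l) c = lincomb l c +v (lincomb_coef l c b) · p.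
Proof.
  revert c; induction l; simpl; intros. rewrite vscal_0l, vadd_0l; auto.
  rewrite IHl, vscal_distr_l, vscal_assoc, vadd_ACA, <- vscal_distr_r. auto.
Qed.

Lemma lincomb_head u t : lincomb (u :: t) (fun i => if Nat.eqb i 0 then RtoC 1 else RtoC 0) = u.
Proof. simpl. rewrite lincomb_zero, vadd_0r, vscal_1; auto. Qed.

Lemma span_ind (P : X -> Prop) l :
  P 0v -> (forall x y, P x -> P y -> P (x +v y)) -> (forall c x, P x -> P (c · x)) ->
  (forall u, In u l -> P u) -> forall x, in_span l x -> P x.
Proof.
  intros H0 Ha Hs Hl x [c ->]. revert c Hl. induction l; simpl; intros; auto.
Qed.

Lemma in_span_0 l : in_span l 0v.
Proof. exists (fun _ => RtoC 0). rewrite lincomb_zero; auto. Qed.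

Lemma in_span_add l x y : in_span l x -> in_span l y -> in_span l (x +v y).
Proof. intros [c ->] [d ->]. exists (fun i => Cplus (c i) (d i)). apply lincomb_add. Qed.

Lemma in_span_scal l a x : in_span l x -> in_span l (a · x).
Proof. intros [c ->]. exists (fun i => Cmult a (c i)). apply lincomb_scal. Qed.

Lemma in_span_In l u : In u l -> in_span l u.
Proof.
  induction l; simpl; intros H. contradiction. destruct H as [->|Hi].
  - exists (fun i => if Nat.eqb i 0 then RtoC 1 else RtoC 0). rewrite lincomb_head; auto.
  - destruct (IHl Hi) as [c Hc]. exists (fun i => match i with O => RtoC 0 | S j => c j end).
    simpl. rewrite vscal_0l, vadd_0l. auto.
Qed.

Lemma in_span_trans l w x : (forall u, In u w -> in_span l u) -> in_span w x -> in_span l x.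
Proof.
  intros Hw. apply span_ind; auto. apply in_span_0. apply in_span_add. apply in_span_scal.
Qed.

Lemma inner_orth_span F x : (forall u, In u F -> << x, u >> = RtoC 0) -> forall y, in_span F y ->
  << x, y >> = RtoC 0.
Proof.
  intros Hu. apply (span_ind (fun y => << x, y >> = RtoC 0)).
  - apply inner_0r.
  - intros a b Ha Hb. rewrite inner_addr, Ha, Hb. solve_C.
  - intros c a Ha. rewrite inner_scalr, Ha. solve_C.
  - auto.
Qed.

Lemma orth_to_span F l x : (forall u, In u l -> orth_to F u) -> in_span l x -> orth_to F x.
Proof.
  intros Hl. apply (span_ind (orth_to F)).
  - intros f _. apply inner_0l.
  - intros a b Ha Hb f Hf. rewrite inner_addl, Ha, Hb; auto. solve_C.
  - intros c a Ha f Hf. rewrite inner_scall, Ha; auto. solve_C.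
  - auto.
Qed.

Lemma sqnorm_eq0_iff x : sqnorm X x = 0 <-> << x, x >> = RtoC 0.
Proof.
  rewrite inner_self_real. split; intro E. rewrite E; auto. injection E; auto.
Qed.

Lemma indep_tl u t : indep (u :: t) -> indep t.
Proof.
  intros Hn c Hc i Hi.
  specialize (Hn (fun j => match j with O => RtoC 0 | S k => c k end)). simpl in Hn.
  rewrite vscal_0l, vadd_0l in Hn. apply (Hn Hc (S i)). lia.
Qed.

Lemma indep_shift_pivot l1 p l2 b : indep (l1 ++ p :: l2) -> indep (map (fun u => u +v (b u) · p) (l1 ++ l2)).
Proof.
  intros Hn c Hc i Hi. rewrite length_map, length_app in Hi.
  rewrite lincomb_shift, lincomb_app in Hc.
  set (g := lincomb_coef (l1 ++ l2) c b) in *.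
  set (c' := fun j => if Nat.ltb j (length l1) then c j else if Nat.eqb j (length l1) then g else c (j - 1)%nat).
  assert (E : lincomb (l1 ++ p :: l2) c' = lincomb l1 c +v lincomb l2 (fun i => c (length l1 + i)%nat) +v g · p).
  { rewrite lincomb_app. simpl.
    rewrite (lincomb_ext l1 c' c).
    2:{ intros j Hj. unfold c'. rewrite (proj2 (Nat.ltb_lt _ _) Hj). auto. }
    unfold c' at 1. rewrite Nat.add_0_r, Nat.ltb_irrefl, Nat.eqb_refl.
    rewrite (lincomb_ext l2 (fun i : nat => c' (length l1 + S i)%nat) (fun i => c (length l1 + i)%nat)).
    2:{ intros j Hj. unfold c'. replace (Nat.ltb (length l1 + S j) (length l1)) with false.
        replace (Nat.eqb (length l1 + S j) (length l1)) with false. f_equal. lia.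
        symmetry; apply Nat.eqb_neq; lia. symmetry; apply Nat.ltb_ge; lia. }
    rewrite <- vadd_assoc. f_equal. apply vadd_comm. }
  rewrite <- E in Hc. specialize (Hn c' Hc).
  destruct (Nat.ltb_spec i (length l1)) as [Hlt|Hge].
  - specialize (Hn i). unfold c' in Hn. rewrite (proj2 (Nat.ltb_lt _ _) Hlt) in Hn.
    apply Hn. rewrite length_app; simpl; lia.
  - specialize (Hn (S i)). unfold c' in Hn.
    replace (Nat.ltb (S i) (length l1)) with false in Hn by (symmetry; apply Nat.ltb_ge; lia).
    replace (Nat.eqb (S i) (length l1)) with false in Hn by (symmetry; apply Nat.eqb_neq; lia).
    replace (S i - 1)%nat with i in Hn by lia. apply Hn. rewrite length_app; simpl; lia.
Qed.

(* One step of Gaussian elimination: a pivot [p] with [<p, f> <> 0] removes the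
   [f]-component of the other vectors. *)
Lemma orth_reduce_step l f : indep l -> l <> nil ->
  exists w, length w = (length l - 1)%nat /\ indep w /\ (forall u, In u w -> in_span l u)
    /\ (forall u, In u w -> << u, f >> = RtoC 0).
Proof.
  intros Hn Hne.
  destruct (classic (exists p, In p l /\ << p, f >> <> RtoC 0)) as [[p [Hp Hpf]]|Hno].
  - destruct (in_split _ _ Hp) as [l1 [l2 El]]. subst l.
    set (a := << p, f >>) in *.
    set (b := fun u => Copp (Cdiv (<< u, f >>) a)).
    exists (map (fun u => u +v (b u) · p) (l1 ++ l2)). split; [|split; [|split]].
    + rewrite length_map, !length_app. simpl. lia.
    + apply indep_shift_pivot; auto.
    + intros u Hu. apply in_map_iff in Hu. destruct Hu as [v [<- Hv]].
      apply in_span_add. apply in_span_In. apply in_app_or in Hv. apply in_or_app.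
      destruct Hv; auto. right; right; auto.
      apply in_span_scal, in_span_In, in_or_app; simpl; auto.
    + intros u Hu. apply in_map_iff in Hu. destruct Hu as [v [<- Hv]].
      rewrite inner_addl, inner_scall. fold a. unfold b.
      destruct (<< v, f >>) as [x1 x2]. destruct a as [a1 a2].
      assert (a1 * a1 + a2 * a2 <> 0).
      { intro Z. apply Hpf. assert (a1 = 0) by nra. assert (a2 = 0) by nra. subst; auto. }
      apply C_eq; simpl; field; auto.
  - exists (tl l). destruct l as [|u t]. congruence. simpl. split; [lia|split;[|split]].
    + eapply indep_tl; eauto.
    + intros v Hv. apply in_span_In. simpl; auto.
    + intros v Hv. destruct (classic (<< v, f >> = RtoC 0)); auto. exfalso. apply Hno.
      exists v. simpl; auto.
Qed.

Lemma orth_reduce F : forall v, indep v -> (length F <= length v)%nat ->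
  exists w, length w = (length v - length F)%nat /\ indep w /\ (forall u, In u w -> in_span v u)
    /\ (forall u, In u w -> orth_to F u).
Proof.
  induction F as [|f F IH]; intros v Hv Hl.
  - exists v. simpl. repeat split; auto. rewrite Nat.sub_0_r; auto. apply in_span_In.
    intros u _ f []. 
  - simpl in Hl. destruct (IH v Hv) as [w [Hw1 [Hw2 [Hw3 Hw4]]]]. lia.
    destruct (orth_reduce_step w f Hw2) as [w' [H1 [H2 [H3 H4]]]].
    { intro Z. subst. simpl in Hw1. lia. }
    exists w'. split. simpl. lia. split; auto. split.
    + intros u Hu. eapply in_span_trans. exact Hw3. auto.
    + intros u Hu g [<-|Hg]. auto.
      apply (orth_to_span F w u Hw4 (H3 u Hu)). auto.
Qed.

Lemma exists_orth_in_span v F : indep v -> (length F < length v)%nat ->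
  exists x, in_span v x /\ orth_to F x /\ sqnorm X x <> 0.
Proof.
  intros Hv Hl. destruct (orth_reduce F v Hv) as [w [H1 [H2 [H3 H4]]]]. lia.
  destruct w as [|u t]. simpl in H1. lia.
  exists u. split. apply H3; simpl; auto. split. apply H4; simpl; auto.
  intro Z. specialize (H2 (fun i => if Nat.eqb i 0 then RtoC 1 else RtoC 0)).
  rewrite lincomb_head in H2. specialize (H2 Z O). simpl in H2.
  assert (RtoC 1 = RtoC 0) by (apply H2; lia). injection H. lra.
Qed.

End Span.

(** * Operators *)

(* One-sided: this only says [limsup r <= 0]; it is applied to nonnegative sequences. *)
Definition null_seq (r : nat -> R) := forall e, 0 < e -> exists N, forall n, (N <= n)%nat -> r n < e.

Lemma null_seq_le (r q : nat -> R) : null_seq q -> (forall n, r n <= q n) -> null_seq r.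
Proof.
  intros Hq Hle e He. destruct (Hq e He) as [N HN]. exists N. intros n Hn. specialize (HN n Hn).
  specialize (Hle n). lra.
Qed.

Lemma null_seq_plus (r q : nat -> R) : null_seq r -> null_seq q -> null_seq (fun n => r n + q n).
Proof.
  intros Hr Hq e He. destruct (Hr (e/2)) as [N1 H1]; try lra. destruct (Hq (e/2)) as [N2 H2]; try lra.
  exists (N1 + N2)%nat. intros n Hn. specialize (H1 n ltac:(lia)). specialize (H2 n ltac:(lia)). lra.
Qed.

Lemma null_seq_scal (c : R) (r : nat -> R) : 0 <= c -> null_seq r -> null_seq (fun n => c * r n).
Proof.
  intros Hc Hr e He. destruct (Hr (e / (c + 1))) as [N HN]. apply Rdiv_lt_0_compat; lra.
  exists N. intros n Hn. specialize (HN n Hn).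
  assert (c * r n <= c * (e / (c+1))).
  { destruct (Rle_dec (r n) (e/(c+1))). apply Rmult_le_compat_l; lra. lra. }
  assert (c * (e / (c+1)) < e). { unfold Rdiv. apply (Rmult_lt_reg_r (c+1)). lra.
    rewrite Rmult_assoc, Rmult_assoc, Rinv_l by lra. nra. }
  lra.
Qed.

Lemma le0_of_null_seq (c : R) (r : nat -> R) : null_seq r -> (forall n, c <= r n) -> c <= 0.
Proof.
  intros Hr Hc. destruct (Rle_dec c 0); auto. destruct (Hr c) as [N HN]; try lra.
  specialize (HN N (le_n N)). specialize (Hc N). lra.
Qed.

Lemma null_seq_inv (c : R) : 0 <= c -> null_seq (fun n => c / INR (S n)).
Proof.
  intros Hc e He. destruct (INR_unbounded (c / e)) as [N Hup].
  exists N. intros n Hn.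
  assert (INR N <= INR n) by (apply le_INR; auto).
  rewrite S_INR. apply (Rmult_lt_reg_r (INR n + 1)). pose proof (pos_INR n); lra.
  unfold Rdiv. rewrite Rmult_assoc, Rinv_l by (pose proof (pos_INR n); lra). rewrite Rmult_1_r.
  assert (c < e * (INR n + 1)).
  { apply (Rmult_lt_reg_r (/ e)). apply Rinv_0_lt_compat; lra.
    replace (e * (INR n + 1) * / e) with (INR n + 1) by (field; lra). unfold Rdiv in Hup. lra. }
  lra.
Qed.

Lemma null_seq_sub (r : nat -> R) (phi : nat -> nat) : null_seq r -> (forall n, (n <= phi n)%nat) ->
  null_seq (fun n => r (phi n)).
Proof.
  intros Hr Hp e He. destruct (Hr e He) as [N HN]. exists N. intros n Hn. apply HN. specialize (Hp n). lia.
Qed.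

Lemma strict_incr_ge_id (phi : nat -> nat) : (forall n, (phi n < phi (S n))%nat) ->
  forall n, (n <= phi n)%nat.
Proof. intros H n. induction n. lia. specialize (H n). lia. Qed.

Lemma null_seq_sqrt (r : nat -> R) : null_seq r -> (forall n, 0 <= r n) -> null_seq (fun n => sqrt (r n)).
Proof.
  intros Hr Hpos e He. destruct (Hr (e * e)) as [N HN]. nra. exists N. intros n Hn. specialize (HN n Hn).
  rewrite <- (sqrt_square e) by lra. apply sqrt_lt_1_alt. split; auto.
Qed.

Section Operators.
Variables X Y : InnerSpace.
Definition linear (T : X -> Y) := (forall x y, T (vadd X x y) = vadd Y (T x) (T y)) /\
  (forall a x, T (vscal X a x) = vscal Y a (T x)).
Definition adjoint (T : X -> Y) (Ts : Y -> X) := forall x y, inner Y (T x) y = inner X x (Ts y).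
Definition bounded_by (T : X -> Y) (C : R) := forall x, sqnorm Y (T x) <= C * sqnorm X x.
Definition converges (u : nat -> Y) (l : Y) := forall e, 0 < e -> exists N, forall n, (N <= n)%nat ->
  vnorm Y (vsub Y (u n) l) < e.
Definition compact_op (T : X -> Y) := forall u : nat -> X, (exists M, forall n, vnorm X (u n) <= M) ->
  exists (phi : nat -> nat) (l : Y), (forall n, (phi n < phi (S n))%nat) /\ converges (fun n => T (u (phi n))) l.

Lemma linear_0 T : linear T -> T (vzero X) = vzero Y.
Proof. intros [_ Hs]. rewrite <- (vscal_0l X (vzero X)), Hs, vscal_0l. auto. Qed.

Lemma linear_opp T x : linear T -> T (vopp X x) = vopp Y (T x).
Proof. intros [Ha Hs]. rewrite vopp_eq_scal, Hs, <- vopp_eq_scal. auto. Qed.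

Lemma linear_sub T x y : linear T -> T (vsub X x y) = vsub Y (T x) (T y).
Proof. intros HT. unfold vsub. rewrite (proj1 HT), linear_opp; auto. Qed.

Lemma linear_lincomb T l c : linear T -> T (lincomb X l c) = lincomb Y (map T l) c.
Proof.
  intros HT. revert c. induction l; simpl; intros. apply linear_0; auto.
  rewrite (proj1 HT), (proj2 HT), IHl. auto.
Qed.

Lemma adjoint_sym T Ts : adjoint T Ts -> forall x y, inner X (Ts y) x = inner Y y (T x).
Proof. intros H x y. rewrite inner_conj, <- H, <- inner_conj. auto. Qed.

Lemma sqnorm_adjoint_le T Ts (y : Y) M : adjoint T Ts -> 0 < M ->
  sqnorm Y (T (Ts y)) <= M * sqnorm X (Ts y) -> sqnorm X (Ts y) <= M * sqnorm Y y.
Proof.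
  intros Ha HM HT.
  assert (E : sqnorm X (Ts y) = Re (inner Y y (T (Ts y)))).
  { unfold sqnorm at 1. rewrite adjoint_sym with (T := T) by auto. reflexivity. }
  pose proof (re_inner_le_amgm Y y (T (Ts y)) M HM).
  assert (sqnorm Y (T (Ts y)) / M <= sqnorm X (Ts y)).
  { apply (Rmult_le_reg_r M); auto. unfold Rdiv. rewrite Rmult_assoc, Rinv_l by lra. lra. }
  lra.
Qed.

End Operators.

Lemma adjoint_bounded_by (X Y : InnerSpace) (T : X -> Y) Ts C :
  0 < C -> adjoint X Y T Ts -> bounded_by X Y T C -> bounded_by Y X Ts C.
Proof. intros HC Ha Hb y. apply (sqnorm_adjoint_le X Y T); auto. Qed.

Definition definite (X : InnerSpace) := forall x : X, sqnorm X x = 0 -> x = vzero X.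

Lemma eq_of_orth_sub (X : InnerSpace) (Xd : definite X) (u v : X) :
  (forall x, inner X x (vsub X u v) = RtoC 0) -> u = v.
Proof.
  intros H. apply vsub_eq0. apply Xd. apply sqnorm_eq0_iff. apply H.
Qed.

Lemma adjoint_linear (X Y : InnerSpace) (Xd : definite X) (T : X -> Y) Ts : linear X Y T ->
  adjoint X Y T Ts -> linear Y X Ts.
Proof.
  intros HT Ha. split.
  - intros x y. apply eq_of_orth_sub; auto. intro z. rewrite inner_subr, inner_addr, <- !Ha, inner_addr.
    solve_C.
  - intros a x. apply eq_of_orth_sub; auto. intro z. rewrite inner_subr, inner_scalr, <- !Ha, inner_scalr.
    solve_C.
Qed.

Lemma sqnorm_0 (X : InnerSpace) : sqnorm X (vzero X) = 0.
Proof. unfold sqnorm. rewrite inner_0l. auto. Qed.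

Lemma vnorm_apply_le (X Y : InnerSpace) (T : X -> Y) C x : 0 < C -> bounded_by X Y T C ->
  vnorm Y (T x) <= sqrt C * vnorm X x.
Proof.
  intros HC Hb. unfold vnorm. rewrite <- sqrt_mult_alt by lra. apply sqrt_le_1_alt. apply Hb.
Qed.

Lemma bounded_by_mono (X Y : InnerSpace) (T : X -> Y) C C' : C <= C' -> bounded_by X Y T C ->
  bounded_by X Y T C'.
Proof. intros H Hb x. specialize (Hb x). pose proof (sqnorm_ge0 X x). nra. Qed.

Lemma compact_op_ext (X Y : InnerSpace) (T U : X -> Y) : (forall x, T x = U x) -> compact_op X Y T ->
  compact_op X Y U.
Proof.
  intros E Hc u Hu. destruct (Hc u Hu) as [phi [l [H1 H2]]]. exists phi, l. split; auto.
  intros e He. destruct (H2 e He) as [N HN]. exists N. intros n Hn. rewrite <- E. apply HN; auto.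
Qed.

Lemma compact_op_compl (X Y Z : InnerSpace) (T : X -> Y) (U : Y -> Z) C :
  compact_op X Y T -> linear Y Z U -> 0 < C -> bounded_by Y Z U C -> compact_op X Z (fun x => U (T x)).
Proof.
  intros Hc HU HC Hb u Hu. destruct (Hc u Hu) as [phi [l [H1 H2]]]. exists phi, (U l). split; auto.
  intros e He. destruct (H2 (e / (sqrt C + 1))) as [N HN].
  { apply Rdiv_lt_0_compat; auto. pose proof (sqrt_pos C); lra. }
  exists N. intros n Hn. rewrite <- linear_sub by auto.
  eapply Rle_lt_trans. apply (vnorm_apply_le Y Z U C); auto.
  specialize (HN n Hn). pose proof (sqrt_pos C).
  assert (sqrt C * vnorm Y (vsub Y (T (u (phi n))) l) <= sqrt C * (e / (sqrt C + 1))).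
  { apply Rmult_le_compat_l; lra. }
  assert (sqrt C * (e / (sqrt C + 1)) < e).
  { unfold Rdiv. apply (Rmult_lt_reg_r (sqrt C + 1)). lra. rewrite Rmult_assoc, Rmult_assoc, Rinv_l by lra. nra. }
  lra.
Qed.

Lemma compact_op_compr (X Y Z : InnerSpace) (U : X -> Y) (T : Y -> Z) C :
  compact_op Y Z T -> 0 < C -> bounded_by X Y U C -> compact_op X Z (fun x => T (U x)).
Proof.
  intros Hc HC Hb u [M HM]. apply (Hc (fun n => U (u n))).
  exists (sqrt C * M). intro n. eapply Rle_trans. apply (vnorm_apply_le X Y U C); auto.
  apply Rmult_le_compat_l. apply sqrt_pos. auto.
Qed.

Lemma converges_sub (Y : InnerSpace) (f : nat -> Y) l psi : converges Y f l ->
  (forall n, (psi n < psi (S n))%nat) -> converges Y (fun n => f (psi n)) l.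
Proof.
  intros H Hp e He. destruct (H e He) as [N HN]. exists N. intros n Hn. apply HN.
  pose proof (strict_incr_ge_id psi Hp n). lia.
Qed.

Lemma vopp_add (Y : InnerSpace) (a b : Y) : vopp Y (vadd Y a b) = vadd Y (vopp Y a) (vopp Y b).
Proof. rewrite !vopp_eq_scal, vscal_distr_l. auto. Qed.

Lemma vsub_add (Y : InnerSpace) (a b l1 l2 : Y) :
  vsub Y (vadd Y a b) (vadd Y l1 l2) = vadd Y (vsub Y a l1) (vsub Y b l2).
Proof. unfold vsub. rewrite vopp_add, vadd_ACA. auto. Qed.

Lemma compact_op_add (X Y : InnerSpace) (T1 T2 : X -> Y) : compact_op X Y T1 -> compact_op X Y T2 ->
  compact_op X Y (fun x => vadd Y (T1 x) (T2 x)).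
Proof.
  intros H1 H2 u Hu. destruct (H1 u Hu) as [p1 [l1 [Hp1 Hc1]]].
  destruct (H2 (fun n => u (p1 n))) as [p2 [l2 [Hp2 Hc2]]].
  { destruct Hu as [M HM]. exists M; auto. }
  exists (fun n => p1 (p2 n)), (vadd Y l1 l2). split.
  { intro n. assert (p1 (p2 n) < p1 (p2 (S n)))%nat; auto.
    assert (forall a b, (a < b)%nat -> (p1 a < p1 b)%nat).
    { intros a b Hab. induction b. lia. destruct (Nat.eq_dec a b). subst; auto.
      specialize (Hp1 b). assert (p1 a < p1 b)%nat by (apply IHb; lia). lia. }
    apply H. auto. }
  pose proof (converges_sub Y _ _ p2 Hc1 Hp2) as Hc1'.
  intros e He. destruct (Hc1' (e/2)) as [N1 HN1]. lra. destruct (Hc2 (e/2)) as [N2 HN2]. lra.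
  exists (N1 + N2)%nat. intros n Hn. simpl. rewrite vsub_add.
  eapply Rle_lt_trans. apply vnorm_triangle. specialize (HN1 n ltac:(lia)). specialize (HN2 n ltac:(lia)).
  simpl in *. lra.
Qed.

Lemma compact_op_0 (X Y : InnerSpace) : compact_op X Y (fun _ => vzero Y).
Proof.
  intros u _. exists (fun n => n), (vzero Y). split. intro; lia. intros e He. exists O. intros n _.
  rewrite vsub_self. unfold vnorm. rewrite sqnorm_0, sqrt_0. auto.
Qed.

Lemma compact_op_vsum (X Y : InnerSpace) (L : nat) (Tk : nat -> X -> Y) :
  (forall k, (k < L)%nat -> compact_op X Y (Tk k)) -> compact_op X Y (fun x => vsum Y L (fun k => Tk k x)).
Proof.
  induction L; intros H; simpl. apply compact_op_0.
  apply (compact_op_add X Y (fun x => vsum Y L (fun k => Tk k x)) (Tk L)). apply IHL; auto. apply H; auto.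
Qed.

Lemma compact_op_bounded (X Y : InnerSpace) (Xd : definite X) (T : X -> Y) : linear X Y T ->
  compact_op X Y T -> exists C, 0 < C /\ bounded_by X Y T C.
Proof.
  intros HT Hc. apply NNPP. intro Hno.
  assert (Hn : forall n : nat, exists x, sqnorm X x = 1 /\ INR (S n) * INR (S n) < sqnorm Y (T x)).
  { intro n. apply NNPP. intro Hx. apply Hno. exists (INR (S n) * INR (S n)). split.
    pose proof (lt_0_INR (S n) ltac:(lia)). nra.
    intro x. destruct (Rle_lt_or_eq_dec 0 (sqnorm X x) (sqnorm_ge0 X x)) as [Hp|Hz].
    - set (u := vscal X (RtoC (/ vnorm X x)) x).
      assert (0 < vnorm X x) by (unfold vnorm; apply sqrt_lt_R0; auto).
      assert (Hu1 : sqnorm X u = 1).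
      { unfold u. rewrite sqnorm_scal. simpl. rewrite <- (vnorm_sq X x). field. lra. }
      assert (Hu2 : sqnorm Y (T u) = sqnorm Y (T x) / sqnorm X x).
      { unfold u. rewrite (proj2 HT), sqnorm_scal. simpl. rewrite <- (vnorm_sq X x). field. lra. }
      destruct (Rle_dec (sqnorm Y (T x)) (INR (S n) * INR (S n) * sqnorm X x)) as [|Hgt]; auto.
      exfalso. apply Hx. exists u. split; auto. rewrite Hu2.
      apply (Rmult_lt_reg_r (sqnorm X x)); auto.
      replace (sqnorm Y (T x) / sqnorm X x * sqnorm X x) with (sqnorm Y (T x)) by (field; lra). lra.
    - rewrite (Xd x (eq_sym Hz)), linear_0 by auto. rewrite !sqnorm_0. lra. }
  set (xs := fun n => proj1_sig (constructive_indefinite_description _ (Hn n))).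
  assert (Hxs : forall n, sqnorm X (xs n) = 1 /\ INR (S n) * INR (S n) < sqnorm Y (T (xs n))).
  { intro n. unfold xs. destruct (constructive_indefinite_description _ (Hn n)); auto. }
  destruct (Hc xs) as [phi [l [Hphi Hcv]]].
  { exists 1. intro n. unfold vnorm. rewrite (proj1 (Hxs n)), sqrt_1. lra. }
  destruct (Hcv 1) as [N HN]. lra.
  destruct (INR_unbounded (vnorm Y l)) as [n0 Hn0].
  set (n := (N + n0)%nat). specialize (HN n ltac:(unfold n; lia)).
  pose proof (vnorm_diff_le Y (T (xs (phi n))) l).
  pose proof (Rle_abs (vnorm Y (T (xs (phi n))) - vnorm Y l)).
  destruct (Hxs (phi n)) as [_ Hb].
  assert (INR (S (phi n)) < vnorm Y (T (xs (phi n)))).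
  { unfold vnorm. rewrite <- (sqrt_square (INR (S (phi n)))) by apply pos_INR. apply sqrt_lt_1_alt. split; auto.
    pose proof (pos_INR (S (phi n))). nra. }
  assert (INR n0 + 1 <= INR (S (phi n))).
  { rewrite <- S_INR. apply le_INR. pose proof (strict_incr_ge_id phi Hphi n). unfold n in *. lia. }
  lra.
Qed.

(** * Spectral lists of compact operators *)

Section Variational.
Variables X Y : InnerSpace.
Hypothesis Xd : definite X.
Variable T : X -> Y.
Variable Ts : Y -> X.
Hypothesis HT : linear X Y T.
Hypothesis Ha : adjoint X Y T Ts.
Variable C : R.
Hypothesis HC : 0 < C.
Hypothesis Hb : bounded_by X Y T C.

Definition gram (x : X) : X := Ts (T x).

Lemma gram_linear : linear X X gram.
Proof.
  pose proof (adjoint_linear X Y Xd T Ts HT Ha) as [A1 A2]. destruct HT as [B1 B2].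
  split; intros; unfold gram. rewrite B1, A1; auto. rewrite B2, A2; auto.
Qed.

Lemma gram_selfadj x y : inner X (gram x) y = inner X x (gram y).
Proof. unfold gram. rewrite adjoint_sym with (T := T) by auto. apply Ha. Qed.

Lemma sqnorm_apply x : sqnorm Y (T x) = Re (inner X (gram x) x).
Proof. unfold sqnorm, gram. rewrite Ha, re_inner_sym. auto. Qed.

Lemma vnorm_gram_le x : vnorm X (gram x) <= C * vnorm X x.
Proof.
  assert (Hg : sqnorm X (gram x) <= C * C * sqnorm X x).
  { eapply Rle_trans. apply (sqnorm_adjoint_le X Y T Ts (T x) C Ha HC (Hb _)).
    rewrite Rmult_assoc. apply Rmult_le_compat_l; [lra | apply Hb]. }
  unfold vnorm. rewrite <- (sqrt_square C) at 1 by lra. rewrite <- sqrt_mult_alt by nra.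
  apply sqrt_le_1_alt. nra.
Qed.

Definition eig_list (e : list X) := forall u, In u e -> exists mu : R, gram u = vscal X (RtoC mu) u.

Lemma gram_orth_to e x : eig_list e -> orth_to X e x -> orth_to X e (gram x).
Proof.
  intros He Hx f Hf. rewrite gram_selfadj. destruct (He f Hf) as [mu ->]. rewrite inner_scalr, Hx; auto.
  solve_C.
Qed.

Lemma sqnorm_apply_null x : sqnorm X x = 0 -> sqnorm Y (T x) = 0.
Proof. intro H. rewrite (Xd x H), linear_0; auto. apply sqnorm_0. Qed.

Definition normalize (u : X) := vscal X (RtoC (/ vnorm X u)) u.

Lemma normalize_spec u : 0 < sqnorm X u ->
  sqnorm X (normalize u) = 1 /\ sqnorm Y (T (normalize u)) = sqnorm Y (T u) / sqnorm X u.
Proof.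
  intros Hu. unfold normalize. rewrite (proj2 HT), !sqnorm_scal. simpl.
  rewrite <- (vnorm_sq X u). assert (0 < vnorm X u).
  { unfold vnorm. apply sqrt_lt_R0; auto. }
  split; field; lra.
Qed.

Lemma orth_to_scal e c x : orth_to X e x -> orth_to X e (vscal X c x).
Proof. intros H f Hf. rewrite inner_scall, H; auto. solve_C. Qed.

Lemma sqnorm_apply_le_of_unit e M :
  (forall x, orth_to X e x -> sqnorm X x = 1 -> sqnorm Y (T x) <= M) ->
  forall u, orth_to X e u -> sqnorm Y (T u) <= M * sqnorm X u.
Proof.
  intros HM u Hu. destruct (Rle_lt_or_eq_dec 0 (sqnorm X u) (sqnorm_ge0 X u)) as [Hpos|Hz].
  - destruct (normalize_spec u Hpos) as [N1 N2].
    pose proof (HM (normalize u) (orth_to_scal e _ u Hu) N1) as HN. rewrite N2 in HN.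
    apply (Rmult_le_reg_r (/ sqnorm X u)). apply Rinv_0_lt_compat; auto.
    rewrite Rmult_assoc, Rinv_r by lra. lra.
  - rewrite sqnorm_apply_null by auto. rewrite <- Hz. lra.
Qed.

Lemma exists_rayleigh_sup e a : (exists x, orth_to X e x /\ sqnorm Y (T x) > a * sqnorm X x) ->
  exists M, a < M /\ (forall u, orth_to X e u -> sqnorm Y (T u) <= M * sqnorm X u) /\
    forall n : nat, exists x, orth_to X e x /\ sqnorm X x = 1 /\ M - / INR (S n) < sqnorm Y (T x).
Proof.
  intros [x0 [Hx0 Hx0T]].
  assert (Hx0p : 0 < sqnorm X x0).
  { destruct (Rle_lt_or_eq_dec 0 (sqnorm X x0) (sqnorm_ge0 X x0)) as [|Hz]; auto.
    rewrite sqnorm_apply_null in Hx0T by auto. rewrite <- Hz in Hx0T. lra. }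
  set (E := fun r => exists x, orth_to X e x /\ sqnorm X x = 1 /\ r = sqnorm Y (T x)).
  assert (HE0 : E (sqnorm Y (T (normalize x0)))).
  { exists (normalize x0). repeat split; [apply orth_to_scal; auto | apply normalize_spec; auto]. }
  assert (Ebound : bound E).
  { exists C. intros r [x [_ [Hx ->]]]. pose proof (Hb x) as HH. rewrite Hx in HH. lra. }
  destruct (completeness E Ebound (ex_intro _ _ HE0)) as [M [HM1 HM2]].
  exists M. split; [|split].
  - apply HM1 in HE0. destruct (normalize_spec x0 Hx0p) as [_ E2]. rewrite E2 in HE0.
    assert (a < sqnorm Y (T x0) / sqnorm X x0).
    { apply (Rmult_lt_reg_r (sqnorm X x0)); auto. unfold Rdiv. rewrite Rmult_assoc, Rinv_l by lra. lra. }
    lra.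
  - apply sqnorm_apply_le_of_unit. intros x Hx Hx1. apply HM1. exists x. auto.
  - intro n. apply NNPP. intro Hn. assert (M <= M - / INR (S n)).
    { apply HM2. intros r [x [H1 [H2 ->]]]. destruct (Rle_dec (sqnorm Y (T x)) (M - / INR (S n))); auto.
      exfalso. apply Hn. exists x. repeat split; auto. lra. }
    assert (0 < / INR (S n)) by (apply Rinv_0_lt_compat, lt_0_INR; lia). lra.
Qed.

(* For a unit [x], [|gram x - M x|^2 = |gram x|^2 - 2 M |T x|^2 + M^2], and
   [|gram x|^2 <= M |T x|^2] because [gram x] is again orthogonal to [e]. *)
Lemma sqnorm_gram_defect e M x : eig_list e -> 0 < M ->
  (forall u, orth_to X e u -> sqnorm Y (T u) <= M * sqnorm X u) ->
  orth_to X e x -> sqnorm X x = 1 ->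
  sqnorm X (vsub X (gram x) (vscal X (RtoC M) x)) <= M * (M - sqnorm Y (T x)).
Proof.
  intros He HM0 HM Hx Hx1.
  rewrite sqnorm_sub, sqnorm_scal, re_inner_scalr_real. simpl Re; simpl Im.
  rewrite Hx1, <- sqnorm_apply.
  assert (sqnorm X (gram x) <= M * sqnorm Y (T x)).
  { apply (sqnorm_adjoint_le X Y T Ts); auto. apply HM, gram_orth_to; auto. }
  nra.
Qed.

Hypothesis Hc : compact_op X X gram.

Lemma approx_eigvecs_cluster M (xs : nat -> X) r : 0 < M -> null_seq r ->
  (forall n, sqnorm X (xs n) = 1) ->
  (forall n, vnorm X (vsub X (gram (xs n)) (vscal X (RtoC M) (xs n))) <= r n) ->
  exists (phi : nat -> nat) z, (forall n, (n <= phi n)%nat) /\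
    null_seq (fun n => vnorm X (vsub X (xs (phi n)) z)).
Proof.
  intros HM Hr Hxs Happ.
  destruct (Hc xs) as [phi [l [Hphi Hcv]]].
  { exists 1. intro n. unfold vnorm. rewrite Hxs, sqrt_1. lra. }
  pose proof (strict_incr_ge_id phi Hphi) as Hge.
  set (z := vscal X (RtoC (/ M)) l).
  exists phi, z. split; auto.
  assert (Hl : l = vscal X (RtoC M) z).
  { unfold z. rewrite vscal_assoc. replace (Cmult (RtoC M) (RtoC (/ M))) with (RtoC 1).
    rewrite vscal_1; auto. apply C_eq; simpl; field; lra. }
  apply (null_seq_le _ (fun n => / M * (r (phi n) + vnorm X (vsub X (gram (xs (phi n))) l)))).
  - apply null_seq_scal. left; apply Rinv_0_lt_compat; lra.
    apply null_seq_plus. apply null_seq_sub; auto. intros e He. apply Hcv; auto.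
  - intro n.
    replace (vnorm X (vsub X (xs (phi n)) z)) with (/ M * vnorm X (vsub X (vscal X (RtoC M) (xs (phi n))) l))
      by (rewrite Hl, vscal_sub, vnorm_scal_real, Rabs_right by lra; field; lra).
    apply Rmult_le_compat_l. left; apply Rinv_0_lt_compat; lra.
    eapply Rle_trans. apply (vnorm_sub_triangle X _ (gram (xs (phi n)))).
    rewrite vnorm_sub_sym. pose proof (Happ (phi n)). lra.
Qed.

Lemma eigvec_of_approx e M (xs : nat -> X) r : 0 < M -> null_seq r ->
  (forall n, orth_to X e (xs n)) -> (forall n, sqnorm X (xs n) = 1) ->
  (forall n, vnorm X (vsub X (gram (xs n)) (vscal X (RtoC M) (xs n))) <= r n) ->
  exists z, orth_to X e z /\ sqnorm X z = 1 /\ gram z = vscal X (RtoC M) z.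
Proof.
  intros HM Hr Horth Hxs Happ.
  destruct (approx_eigvecs_cluster M xs r HM Hr Hxs Happ) as [phi [z [Hge Hd]]].
  set (d := fun n => vnorm X (vsub X (xs (phi n)) z)) in Hd.
  assert (dpos : forall n, 0 <= d n) by (intro; apply vnorm_ge0).
  exists z. split; [|split].
  - intros f Hf.
    assert (Cmod (inner X z f) <= 0).
    { apply (le0_of_null_seq _ (fun n => vnorm X f * d n)). apply null_seq_scal; auto. apply vnorm_ge0.
      intro n. replace (inner X z f) with (inner X (vsub X z (xs (phi n))) f)
        by (rewrite inner_subl, (Horth (phi n) f Hf); solve_C).
      unfold d. rewrite vnorm_sub_sym, Rmult_comm. apply Cmod_inner_le. }
    pose proof (Cmod_ge_0 (inner X z f)). apply Cmod_eq_0. lra.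
  - assert (Habs : Rabs (vnorm X z - 1) <= 0).
    { apply (le0_of_null_seq _ d); auto. intro n.
      replace 1 with (vnorm X (xs (phi n))) by (unfold vnorm; rewrite Hxs; apply sqrt_1).
      unfold d. rewrite vnorm_sub_sym. apply vnorm_diff_le. }
    apply Rabs_le_between in Habs. rewrite <- vnorm_sq. replace (vnorm X z) with 1 by lra. ring.
  - apply vsub_eq0. apply Xd.
    set (D := vnorm X (vsub X (gram z) (vscal X (RtoC M) z))).
    assert (HD : D <= 0).
    { apply (le0_of_null_seq _ (fun n => (C + M) * d n + r (phi n))).
      { apply null_seq_plus. apply null_seq_scal; auto; lra. apply null_seq_sub; auto. }
      intro n. unfold D. eapply Rle_trans. apply (vnorm_sub_triangle X _ (gram (xs (phi n)))).
      eapply Rle_trans. apply Rplus_le_compat_l.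
      apply (vnorm_sub_triangle X _ (vscal X (RtoC M) (xs (phi n)))).
      rewrite <- (linear_sub X X gram) by apply gram_linear.
      rewrite vscal_sub, vnorm_scal_real, Rabs_right by lra.
      pose proof (vnorm_gram_le (vsub X z (xs (phi n)))) as Hg. rewrite (vnorm_sub_sym X z) in Hg.
      pose proof (Happ (phi n)). unfold d in *. lra. }
    assert (0 <= D) by apply vnorm_ge0.
    assert (HD0 : D = 0) by lra. unfold D in HD0. rewrite <- vnorm_sq, HD0. ring.
Qed.

Lemma exists_eigvec_above e a : eig_list e -> 0 < a ->
  (exists x, orth_to X e x /\ sqnorm Y (T x) > a * sqnorm X x) ->
  exists z M, orth_to X e z /\ sqnorm X z = 1 /\ a < M /\ gram z = vscal X (RtoC M) z.
Proof.
  intros He Hapos Hx. destruct (exists_rayleigh_sup e a Hx) as [M [HMa [HM Hseq]]].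
  assert (HM0 : 0 < M) by lra.
  destruct (choice _ Hseq) as [xs Hxs].
  destruct (eigvec_of_approx e M xs (fun n => sqrt (M / INR (S n)))) as [z Hz]; auto.
  - apply null_seq_sqrt. apply null_seq_inv; lra.
    intro n. apply Rlt_le, Rdiv_lt_0_compat; auto. apply lt_0_INR; lia.
  - intro n; apply Hxs.
  - intro n; apply Hxs.
  - intro n. destruct (Hxs n) as [h1 [h2 h3]]. unfold vnorm. apply sqrt_le_1_alt.
    eapply Rle_trans. apply (sqnorm_gram_defect e M); auto.
    unfold Rdiv. apply Rmult_le_compat_l; lra.
  - exists z, M. tauto.
Qed.

End Variational.

Fixpoint orthonormal (X : InnerSpace) (l : list X) : Prop :=
  match l with nil => True | u :: t => sqnorm X u = 1 /\ (forall v, In v t -> inner X u v = RtoC 0) /\ orthonormal X t end.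

Lemma orthonormal_snoc (X : InnerSpace) e z : orthonormal X e -> sqnorm X z = 1 -> orth_to X e z ->
  orthonormal X (e ++ z :: nil).
Proof.
  induction e; simpl; intros.
  - split; [auto| split; [intros v Hv; destruct Hv| exact I]].
  - destruct H as [h1 [h2 h3]]. split; auto. split.
    + intros v Hv. apply in_app_or in Hv. destruct Hv as [Hv|[<-|[]]]; auto.
      rewrite inner_conj, H1; simpl; auto. solve_C.
    + apply IHe; auto. intros f Hf. apply H1; simpl; auto.
Qed.

Lemma lincomb_in_span (X : InnerSpace) t c : in_span X t (lincomb X t c).
Proof. exists c; auto. Qed.

Lemma sqnorm_orth_add (X : InnerSpace) (u x' : X) c0 : inner X u x' = RtoC 0 ->
  sqnorm X (vadd X (vscal X c0 u) x') = (Re c0 ^ 2 + Im c0 ^ 2) * sqnorm X u + sqnorm X x'.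
Proof.
  intro H. rewrite sqnorm_add, sqnorm_scal, inner_scall, H. simpl. ring.
Qed.

Lemma C_eq0_of_sq (c : C) : Re c ^ 2 + Im c ^ 2 = 0 -> c = RtoC 0.
Proof. destruct c as [a b]; simpl; intro. apply C_eq; simpl; nra. Qed.

Lemma orthonormal_indep (X : InnerSpace) e : orthonormal X e -> indep X e.
Proof.
  induction e as [|u t IH]; intros H c Hc i Hi; simpl in Hi. lia.
  simpl in H, Hc. destruct H as [h1 [h2 h3]].
  rewrite sqnorm_orth_add in Hc by (apply (inner_orth_span X t); auto; apply lincomb_in_span).
  rewrite h1 in Hc. pose proof (sqnorm_ge0 X (lincomb X t (fun i => c (S i)))).
  pose proof (pow2_ge_0 (Re (c O))). pose proof (pow2_ge_0 (Im (c O))).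
  destruct i. apply C_eq0_of_sq. lra.
  apply (IH h3 (fun i => c (S i))). lra. lia.
Qed.

Section SpectralList.
Variables X Y : InnerSpace.
Hypothesis Xd : definite X.
Variable T : X -> Y.
Variable Ts : Y -> X.
Hypothesis HT : linear X Y T.
Hypothesis Ha : adjoint X Y T Ts.
Variable C : R.
Hypothesis HC : 0 < C.
Hypothesis Hb : bounded_by X Y T C.
Hypothesis Hc : compact_op X X (gram X Y T Ts).
Variable a : R.
Hypothesis Hapos : 0 < a.

Notation gramT := (gram X Y T Ts).

Definition eigvecs_above (e : list X) := forall u, In u e ->
  exists mu, a < mu /\ gramT u = vscal X (RtoC mu) u.

Definition is_spectral_list (e : list X) := orthonormal X e /\ eigvecs_above e /\
  forall x, orth_to X e x -> sqnorm Y (T x) <= a * sqnorm X x.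

Definition next_eigvec (e : list X) (z : X) := sqnorm X z = 1 /\ orth_to X e z /\ exists mu, a < mu /\ gramT z = vscal X (RtoC mu) z.

Definition pick_next_eigvec (e : list X) : X := epsilon (inhabits (vzero X)) (next_eigvec e).

Fixpoint greedy_eigvecs (n : nat) : list X :=
  match n with O => nil | S m => let e := greedy_eigvecs m in
    if excluded_middle_informative (exists z, next_eigvec e z) then e ++ pick_next_eigvec e :: nil else e end.

Lemma greedy_eigvecs_spec n : orthonormal X (greedy_eigvecs n) /\ eigvecs_above (greedy_eigvecs n).
Proof.
  induction n; simpl. split; simpl; auto. intros u [].
  destruct IHn as [I1 I2].
  destruct (excluded_middle_informative (exists z, next_eigvec (greedy_eigvecs n) z)); auto.
  pose proof (epsilon_spec (inhabits (vzero X)) (next_eigvec (greedy_eigvecs n)) e) as [P1 [P2 P3]].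
  fold (pick_next_eigvec (greedy_eigvecs n)) in *.
  split. apply orthonormal_snoc; auto.
  intros u Hu. apply in_app_or in Hu. destruct Hu as [Hu|[<-|[]]]; auto.
Qed.

Lemma vnorm_of_sqnorm1 (x : X) : sqnorm X x = 1 -> vnorm X x = 1.
Proof. intro H. unfold vnorm. rewrite H. apply sqrt_1. Qed.

(* The eigenvectors picked are orthonormal with eigenvalues above [a], so their images
   under [gram] are pairwise at distance at least [a]: compactness stops the process. *)
Lemma greedy_eigvecs_stop : exists n, ~ exists z, next_eigvec (greedy_eigvecs n) z.
Proof.
  apply NNPP. intro Hall.
  assert (Hs : forall n, exists z, next_eigvec (greedy_eigvecs n) z).
  { intro n. apply NNPP. intro H. apply Hall. exists n. auto. }
  set (zz := fun n => pick_next_eigvec (greedy_eigvecs n)).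
  assert (Hz : forall n, next_eigvec (greedy_eigvecs n) (zz n)).
  { intro n. apply (epsilon_spec (inhabits (vzero X)) (next_eigvec (greedy_eigvecs n)) (Hs n)). }
  assert (HEL : forall n, greedy_eigvecs (S n) = greedy_eigvecs n ++ zz n :: nil).
  { intro n. simpl. destruct (excluded_middle_informative _); auto. exfalso; auto. }
  assert (Hin : forall n m, (n < m)%nat -> In (zz n) (greedy_eigvecs m)).
  { intros n m Hnm. induction m. lia. rewrite HEL. apply in_or_app.
    destruct (Nat.eq_dec n m). subst. right; simpl; auto. left. apply IHm. lia. }
  destruct (Hc zz) as [phi [l [Hphi Hcv]]].
  { exists 1. intro n. destruct (Hz n) as [h _]. rewrite vnorm_of_sqnorm1; auto. lra. }
  destruct (Hcv (a/2)) as [N HN]. lra.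
  pose proof (HN N (le_n _)) as H1. pose proof (HN (S N) ltac:(lia)) as H2.
  set (i := phi N) in *. set (j := phi (S N)) in *.
  assert (Hij : (i < j)%nat) by apply Hphi.
  pose proof (vnorm_sub_triangle X (gramT (zz i)) l (gramT (zz j))) as H3.
  rewrite (vnorm_sub_sym X l) in H3.
  destruct (Hz i) as [hi1 [hi2 [mi [hmi Si]]]]. destruct (Hz j) as [hj1 [hj2 [mj [hmj Sj]]]].
  assert (Horth : inner X (zz i) (zz j) = RtoC 0).
  { rewrite inner_conj. rewrite (hj2 (zz i)). solve_C. apply Hin; auto. }
  assert (E : sqnorm X (vsub X (gramT (zz i)) (gramT (zz j))) = mi * mi + mj * mj).
  { rewrite Si, Sj, sqnorm_sub, !sqnorm_scal, hi1, hj1, inner_scall, inner_scalr, Horth. simpl. ring. }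
  assert (vnorm X (vsub X (gramT (zz i)) (gramT (zz j))) < a) by lra.
  assert (sqnorm X (vsub X (gramT (zz i)) (gramT (zz j))) < a * a).
  { rewrite <- vnorm_sq. pose proof (vnorm_ge0 X (vsub X (gramT (zz i)) (gramT (zz j)))). nra. }
  nra.
Qed.

Lemma exists_spectral_list : exists e, is_spectral_list e.
Proof.
  destruct greedy_eigvecs_stop as [n Hn]. destruct (greedy_eigvecs_spec n) as [I1 I2].
  exists (greedy_eigvecs n). split; auto. split; auto. intros x Hx.
  destruct (Rle_dec (sqnorm Y (T x)) (a * sqnorm X x)) as [|Hgt]; auto. exfalso.
  destruct (exists_eigvec_above X Y Xd T Ts HT Ha C HC Hb Hc (greedy_eigvecs n) a) as [z [M [h1 [h2 [h3 h4]]]]]; auto.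
  { intros u Hu. destruct (I2 u Hu) as [mu [_ Hmu]]. eauto. }
  { exists x. split; auto. lra. }
  apply Hn. exists z. split; auto. split; auto. exists M; auto.
Qed.

Lemma inner_apply_eigvec_orth (u x' : X) (mu : R) : gramT u = vscal X (RtoC mu) u -> inner X u x' = RtoC 0 ->
  inner Y (T u) (T x') = RtoC 0.
Proof.
  intros Hu H. rewrite Ha. fold (gramT x'). rewrite <- gram_selfadj by auto. rewrite Hu, inner_scall, H.
  solve_C.
Qed.

Lemma inner_gram_eigvec_orth (u x' : X) (mu : R) : gramT u = vscal X (RtoC mu) u -> inner X u x' = RtoC 0 ->
  inner X u (gramT x') = RtoC 0.
Proof.
  intros Hu H. rewrite <- gram_selfadj by auto. rewrite Hu, inner_scall, H. solve_C.
Qed.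

Lemma sqnorm_apply_eigvec (u : X) mu : gramT u = vscal X (RtoC mu) u -> sqnorm Y (T u) = mu * sqnorm X u.
Proof. intros Hu. rewrite sqnorm_apply with (Ts := Ts) by auto. rewrite Hu, re_inner_scall_real. auto. Qed.

Lemma lincomb_excess e : orthonormal X e -> eigvecs_above e -> forall c, let x := lincomb X e c in
  0 <= sqnorm Y (T x) - a * sqnorm X x /\ (sqnorm Y (T x) - a * sqnorm X x = 0 -> sqnorm X x = 0) /\
  0 <= sqnorm X (gramT x) - a * sqnorm Y (T x) /\ (sqnorm X (gramT x) - a * sqnorm Y (T x) = 0 -> sqnorm Y (T x) = 0).
Proof.
  induction e as [|u t IH]; intros Ho He c x; unfold x; clear x; simpl.
  - rewrite (linear_0 X Y T HT), (linear_0 X X gramT (gram_linear X Y Xd T Ts HT Ha)), !sqnorm_0. lra.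
  - destruct Ho as [h1 [h2 h3]].
    assert (He' : eigvecs_above t) by (intros v Hv; apply He; simpl; auto).
    destruct (He u (or_introl eq_refl)) as [mu [Hmu Su]].
    specialize (IH h3 He' (fun i => c (S i))). simpl in IH.
    set (x' := lincomb X t (fun i => c (S i))) in *.
    assert (O1 : inner X u x' = RtoC 0) by (apply (inner_orth_span X t); auto; apply lincomb_in_span).
    rewrite sqnorm_orth_add by auto.
    rewrite (proj1 HT), (proj2 HT).
    rewrite (sqnorm_orth_add Y) by (apply inner_apply_eigvec_orth with mu; auto).
    rewrite (proj1 (gram_linear X Y Xd T Ts HT Ha)), (proj2 (gram_linear X Y Xd T Ts HT Ha)).
    rewrite Su, vscal_assoc. rewrite sqnorm_add, sqnorm_scal, inner_scall.
    rewrite (inner_gram_eigvec_orth u x' mu Su O1). rewrite (sqnorm_apply_eigvec u mu Su), h1.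
    pose proof (pow2_ge_0 (Re (c O))). pose proof (pow2_ge_0 (Im (c O))).
    set (k := Re (c O) ^ 2 + Im (c O) ^ 2).
    assert (Ek : Re (Cmult (c O) (RtoC mu)) ^ 2 + Im (Cmult (c O) (RtoC mu)) ^ 2 = k * (mu * mu)).
    { unfold k. destruct (c O); simpl. ring. }
    rewrite Ek. replace (Re (Cmult (Cmult (c O) (RtoC mu)) (RtoC 0))) with 0 by (destruct (c O); simpl; ring).
    rewrite !Rmult_1_r, Rmult_0_r, Rplus_0_r.
    assert (0 <= k) by (unfold k; lra).
    destruct IH as [I1 [I2 [I3 I4]]].
    assert (0 <= k * (mu - a)) by (apply Rmult_le_pos; lra).
    assert (0 <= k * mu * (mu - a)) by (apply Rmult_le_pos; [apply Rmult_le_pos|]; lra).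
    repeat split.
    + nra.
    + intro Z. assert (Z1 : k * (mu - a) = 0) by nra. assert (Z2 : k = 0).
      { destruct (Rmult_integral _ _ Z1); auto. lra. }
      rewrite Z2. assert (Z3 : sqnorm X x' = 0). apply I2. rewrite Z2 in Z. lra. rewrite Z3. ring.
    + nra.
    + intro Z. assert (Z1 : k * mu * (mu - a) = 0) by nra. assert (Z2 : k = 0).
      { destruct (Rmult_integral _ _ Z1) as [H5|H5]. destruct (Rmult_integral _ _ H5); auto. lra. lra. }
      rewrite Z2. assert (Z3 : sqnorm Y (T x') = 0). apply I4. rewrite Z2 in Z. lra. rewrite Z3. ring.
Qed.

Lemma sqnorm_apply_gt_on_span e : orthonormal X e -> eigvecs_above e -> forall x, in_span X e x ->
  sqnorm X x <> 0 -> sqnorm Y (T x) > a * sqnorm X x.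
Proof.
  intros Ho He x [c ->] Hn. destruct (lincomb_excess e Ho He c) as [I1 [I2 _]].
  destruct (Rle_lt_or_eq_dec _ _ I1); [lra|]. exfalso. apply Hn. apply I2. auto.
Qed.

Lemma sqnorm_adj_gt_on_image_span e : orthonormal X e -> eigvecs_above e ->
  forall y, in_span Y (map T e) y -> sqnorm Y y <> 0 -> sqnorm X (Ts y) > a * sqnorm Y y.
Proof.
  intros Ho He y [c ->] Hn. rewrite <- linear_lincomb in * by auto.
  destruct (lincomb_excess e Ho He c) as [_ [_ [I3 I4]]]. unfold gram in *.
  destruct (Rle_lt_or_eq_dec _ _ I3); [lra|]. exfalso. apply Hn. apply I4. auto.
Qed.

Lemma image_indep e : orthonormal X e -> eigvecs_above e -> indep Y (map T e).
Proof.
  induction e as [|u t IH]; intros Ho He c Hcz i Hi; simpl in Hi. lia.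
  simpl in Ho, Hcz. destruct Ho as [h1 [h2 h3]].
  destruct (He u (or_introl eq_refl)) as [mu [Hmu Su]].
  assert (He' : eigvecs_above t) by (intros v Hv; apply He; simpl; auto).
  rewrite <- linear_lincomb in Hcz by auto.
  assert (O1 : inner X u (lincomb X t (fun i => c (S i))) = RtoC 0) by (apply (inner_orth_span X t); auto; apply lincomb_in_span).
  rewrite (sqnorm_orth_add Y) in Hcz by (apply inner_apply_eigvec_orth with mu; auto).
  rewrite (sqnorm_apply_eigvec u mu Su), h1 in Hcz.
  pose proof (sqnorm_ge0 Y (T (lincomb X t (fun i => c (S i))))).
  pose proof (pow2_ge_0 (Re (c O))). pose proof (pow2_ge_0 (Im (c O))).
  assert (0 <= (Re (c O) ^ 2 + Im (c O) ^ 2) * (mu * 1)) by (apply Rmult_le_pos; lra).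
  destruct i.
  - apply C_eq0_of_sq. assert ((Re (c O) ^ 2 + Im (c O) ^ 2) * (mu * 1) = 0) by lra.
    destruct (Rmult_integral _ _ H3); auto. lra.
  - apply (IH h3 He' (fun i => c (S i))). rewrite <- linear_lincomb by auto. lra. rewrite length_map in Hi.
    rewrite length_map. lia.
Qed.

Lemma adj_bounded_on_image_orth e : (forall x, orth_to X e x -> sqnorm Y (T x) <= a * sqnorm X x) ->
  forall y, orth_to Y (map T e) y -> sqnorm X (Ts y) <= a * sqnorm Y y.
Proof.
  intros Hsp y Hy. apply (sqnorm_adjoint_le X Y T Ts); auto. apply Hsp.
  intros f Hf. rewrite adjoint_sym with (T := T) by auto. apply Hy. apply in_map; auto.
Qed.

End SpectralList.

Lemma length_le_of_separation (X : InnerSpace) (F v : list X) (q : X -> R) b :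
  (forall x, orth_to X F x -> q x <= b * sqnorm X x) -> indep X v ->
  (forall x, in_span X v x -> orth_to X F x -> sqnorm X x <> 0 -> q x > b * sqnorm X x) ->
  (length v <= length F)%nat.
Proof.
  intros H1 H2 H3. destruct (Compare_dec.le_lt_dec (length v) (length F)); auto. exfalso.
  destruct (exists_orth_in_span X v F H2 l) as [x [h1 [h2 h3]]].
  specialize (H1 x h2). specialize (H3 x h1 h2 h3). lra.
Qed.

Lemma map_nth_seq {A} (l : list A) d : map (fun i => nth i l d) (seq 0 (length l)) = l.
Proof.
  induction l; simpl; auto. f_equal. rewrite <- seq_shift, map_map. simpl. auto.
Qed.

Lemma vsum_lincomb (X : InnerSpace) k (v : nat -> X) c :
  vsum X k (fun i => vscal X (c i) (v i)) = lincomb X (map v (seq 0 k)) c.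
Proof.
  induction k. auto. rewrite seq_S, map_app, lincomb_app, <- IHk. simpl.
  rewrite length_map, length_seq, !Nat.add_0_r, vadd_0r. auto.
Qed.

Lemma eq_of_inner_eq (X : InnerSpace) (Xd : definite X) (u w : X) :
  (forall y, inner X u y = inner X w y) -> u = w.
Proof.
  intro H. apply eq_of_orth_sub; auto. intro x.
  rewrite inner_subr, (inner_conj X u x), (inner_conj X w x), H. solve_C.
Qed.

Fixpoint proj (X : InnerSpace) (e : list X) (v : X) : X :=
  match e with nil => vzero X | u :: t => vadd X (vscal X (inner X v u) u) (proj X t v) end.

Lemma proj_span (X : InnerSpace) e v : in_span X e (proj X e v).
Proof.
  induction e; simpl. apply in_span_0.
  destruct IHe as [c Hc]. exists (fun i => match i with O => inner X v a | S j => c j end). simpl.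
  rewrite Hc. auto.
Qed.

Lemma inner_proj (X : InnerSpace) e v : orthonormal X e -> forall f, In f e ->
  inner X (proj X e v) f = inner X v f.
Proof.
  induction e as [|u t IH]; simpl; intros Ho f Hf. contradiction.
  destruct Ho as [h1 [h2 h3]].
  rewrite inner_addl, inner_scall. destruct Hf as [<-|Hf].
  - rewrite inner_self_real, h1. assert (inner X (proj X t v) u = RtoC 0).
    { rewrite inner_conj. rewrite (inner_orth_span X t u h2). solve_C. apply proj_span. }
    rewrite H. solve_C.
  - rewrite (h2 f Hf), IH; auto. solve_C.
Qed.

Section EigvecInSpan.
Variables X Y : InnerSpace.
Hypothesis Xd : definite X.
Variable T : X -> Y.
Variable Ts : Y -> X.
Hypothesis HT : linear X Y T.
Hypothesis Ha : adjoint X Y T Ts.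
Notation gramT := (gram X Y T Ts).

Lemma gram_span_stable e x : eigvecs_above X Y T Ts 0 e -> in_span X e x -> in_span X e (gramT x).
Proof.
  intros He. pose proof (gram_linear X Y Xd T Ts HT Ha) as HG.
  apply (span_ind X (fun x => in_span X e (gramT x))).
  - rewrite (linear_0 X X gramT HG). apply in_span_0.
  - intros x1 x2 H1 H2. rewrite (proj1 HG). apply in_span_add; auto.
  - intros c x1 H1. rewrite (proj2 HG). apply in_span_scal; auto.
  - intros u Hu. destruct (He u Hu) as [mu [_ ->]]. apply in_span_scal, in_span_In; auto.
Qed.

(* [w] is the component of [v] orthogonal to [e]; [gram] maps it to [lam w] up to
   an error that lies both in [span e] and in [e^⊥], hence vanishes. *)
Lemma eigvec_in_span a e v lam : 0 <= a -> is_spectral_list X Y T Ts a e ->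
  a < lam -> gramT v = vscal X (RtoC lam) v -> in_span X e v.
Proof.
  intros Ha0 [Ho [He Hsp]] Hlam Sv.
  assert (He0 : eigvecs_above X Y T Ts 0 e).
  { intros u Hu. destruct (He u Hu) as [mu [Hmu Hu']]. exists mu. split; auto. lra. }
  set (p := proj X e v). set (w := vsub X v p).
  assert (Hp : in_span X e p) by apply proj_span.
  assert (Hw : orth_to X e w).
  { intros f Hf. unfold w. rewrite inner_subl. unfold p. rewrite inner_proj; auto. solve_C. }
  set (d := vsub X (vscal X (RtoC lam) p) (gramT p)).
  assert (Hd : in_span X e d).
  { unfold d, vsub. apply in_span_add. apply in_span_scal; auto.
    rewrite vopp_eq_scal. apply in_span_scal, gram_span_stable; auto. }
  set (r := vsub X (gramT w) (vscal X (RtoC lam) w)).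
  assert (Er : forall y, inner X r y = inner X d y).
  { intro y. unfold r, d, w. rewrite (linear_sub X X gramT) by (apply gram_linear; auto).
    rewrite Sv, !inner_subl, !inner_scall, !inner_subl. solve_C. }
  assert (Hr : orth_to X e r).
  { intros f Hf. unfold r. rewrite inner_subl, inner_scall, Hw; auto.
    rewrite (gram_orth_to X Y T Ts Ha e w); auto. solve_C.
    intros g Hg. destruct (He g Hg) as [mu [_ Hmu]]. eauto. }
  assert (Sw : gramT w = vscal X (RtoC lam) w).
  { apply vsub_eq0, Xd. fold r. unfold sqnorm. rewrite Er, inner_conj, (inner_orth_span X e r); auto. }
  assert (Zw : sqnorm X w = 0).
  { pose proof (Hsp w Hw) as Hb. rewrite (sqnorm_apply X Y T Ts Ha), Sw, re_inner_scall_real in Hb.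
    fold (sqnorm X w) in Hb. pose proof (sqnorm_ge0 X w). nra. }
  replace v with p by (symmetry; apply (vsub_eq0 X), Xd; auto).
  exact Hp.
Qed.

End EigvecInSpan.

(** * The counting function *)

Section CountingFunction.
Variable H : Hilbert.
Notation X := (of_Hilbert H).

Lemma hilbert_definite : definite X.
Proof. intros x Hx. apply (hinner_def H). apply (sqnorm_eq0_iff X). auto. Qed.

Lemma lin_indep_iff k (v : nat -> H) : lin_indep H k v <-> indep X (map v (seq 0 k)).
Proof.
  split; intros Hv c Hc i Hi.
  - rewrite length_map, length_seq in Hi. apply (Hv c); auto.
    rewrite <- vsum_lincomb in Hc. exact (hilbert_definite _ Hc).
  - apply Hv; [| rewrite length_map, length_seq; auto].
    rewrite <- vsum_lincomb. change (sqnorm X (hsum H k (fun i => hscal H (c i) (v i))) = 0).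
    rewrite Hc. apply sqnorm_0.
Qed.

Variable T Ts : H -> H.
Hypothesis HT : linear X X T.
Hypothesis Ha : adjoint X X T Ts.

Lemma eigvec_AstarA_iff lam v : eigvec_AstarA H T lam v <-> gram X X T Ts v = vscal X (RtoC lam) v.
Proof.
  split; intro Hv.
  - apply (eq_of_inner_eq X hilbert_definite). intro y.
    rewrite (gram_selfadj X X T Ts Ha), inner_scall. unfold gram. rewrite <- Ha. apply Hv.
  - intro y. change (hinner H) with (inner X). rewrite Ha. fold (gram X X T Ts y).
    rewrite <- (gram_selfadj X X T Ts Ha), Hv, inner_scall. auto.
Qed.

Variable s : R.
Variable e : list X.
Hypothesis He : is_spectral_list X X T Ts (s ^ 2) e.

Lemma eigvec_family_length_le k (v : nat -> H) : lin_indep H k v ->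
  (forall i, (i < k)%nat -> exists lam, s ^ 2 < lam /\ eigvec_AstarA H T lam (v i)) -> (k <= length e)%nat.
Proof.
  intros Hv Hev. apply lin_indep_iff in Hv.
  assert (Hspan : forall u, In u (map v (seq 0 k)) -> in_span X e u).
  { intros u Hu. apply in_map_iff in Hu. destruct Hu as [i [<- Hi]]. apply in_seq in Hi.
    destruct (Hev i ltac:(lia)) as [lam [Hlam Hi']]. apply eigvec_AstarA_iff in Hi'.
    apply (eigvec_in_span X X hilbert_definite T Ts HT Ha (s ^ 2) e (v i) lam); auto.
    apply pow2_ge_0. }
  replace k with (length (map v (seq 0 k))) by (rewrite length_map, length_seq; auto).
  destruct (Compare_dec.le_lt_dec (length (map v (seq 0 k))) (length e)) as [|Hlt]; auto. exfalso.
  destruct (exists_orth_in_span X _ e Hv Hlt) as [x [Hx [Hxe Hx0]]].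
  apply Hx0, (sqnorm_eq0_iff X), (inner_orth_span X e x); auto.
  apply (in_span_trans X e (map v (seq 0 k))); auto.
Qed.

Lemma ncount_of_spectral_list : ncount H s T = INR (length e).
Proof.
  unfold ncount. rewrite (is_lub_Rbar_unique _ (INR (length e))); auto. split.
  - intros x [k [-> [v [Hv Hev]]]]. simpl. apply le_INR. apply (eigvec_family_length_le k v); auto.
  - intros b Hb. apply Hb. exists (length e). split; auto.
    exists (fun i => nth i e (h0 H)). split.
    + apply lin_indep_iff. rewrite map_nth_seq. apply orthonormal_indep, He.
    + intros i Hi. destruct (proj1 (proj2 He) (nth i e (h0 H))) as [mu [Hmu Hmu2]]. apply nth_In; auto.
      exists mu. split; auto. apply eigvec_AstarA_iff; auto.
Qed.

End CountingFunction.

Definition admissible (X Y : InnerSpace) (T : X -> Y) (Ts : Y -> X) :=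
  linear X Y T /\ adjoint X Y T Ts /\ (exists C, 0 < C /\ bounded_by X Y T C) /\ compact_op X X (gram X Y T Ts).

Lemma admissible_spectral_list (X Y : InnerSpace) (Xd : definite X) T Ts a :
  admissible X Y T Ts -> 0 < a -> exists e, is_spectral_list X Y T Ts a e.
Proof.
  intros [HT [Ha [[C [HC Hb]] Hc]]] Hapos. exact (exists_spectral_list X Y Xd T Ts HT Ha C HC Hb Hc a Hapos).
Qed.

Section CountingProperties.
Variable H : Hilbert.
Notation X := (of_Hilbert H).

Lemma ncount_spectral_list T Ts s : admissible X X T Ts -> 0 < s ->
  exists e, ncount H s T = INR (length e) /\ is_spectral_list X X T Ts (s ^ 2) e.
Proof.
  intros HG Hs. destruct (admissible_spectral_list X X (hilbert_definite H) T Ts (s ^ 2) HG) as [e He].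
  { apply pow_lt; auto. }
  exists e. split; auto. destruct HG as [HT [Ha _]]. exact (ncount_of_spectral_list H T Ts HT Ha s e He).
Qed.

Lemma ncount_ge0 T Ts s : admissible X X T Ts -> 0 < s -> 0 <= ncount H s T.
Proof. intros HG Hs. destruct (ncount_spectral_list T Ts s HG Hs) as [e [E _]]. rewrite E. apply pos_INR. Qed.

Lemma ncount_antitone T Ts s s' : admissible X X T Ts -> 0 < s -> s <= s' -> ncount H s' T <= ncount H s T.
Proof.
  intros HG Hs Hss. destruct (ncount_spectral_list T Ts s HG Hs) as [e [E1 [O1 [G1 P1]]]].
  destruct (ncount_spectral_list T Ts s' HG ltac:(lra)) as [e' [E2 [O2 [G2 _]]]].
  rewrite E1, E2. apply le_INR.
  destruct HG as [HT [Ha _]].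
  apply (length_le_of_separation X e e' (fun x => sqnorm X (T x)) (s ^ 2)); auto.
  - apply orthonormal_indep; auto.
  - intros x Hx _ Hn. assert (Hs' : 0 < s' ^ 2) by (apply pow_lt; lra).
    pose proof (sqnorm_apply_gt_on_span X X (hilbert_definite H) T Ts HT Ha (s' ^ 2) Hs' e' O2 G2 x Hx Hn).
    assert (s ^ 2 <= s' ^ 2) by (apply pow_incr; lra). pose proof (sqnorm_ge0 X x). nra.
Qed.

Lemma ncount_eq0_large T Ts s C : admissible X X T Ts -> 0 < s -> bounded_by X X T C -> C <= s ^ 2 ->
  ncount H s T = 0.
Proof.
  intros HG Hs Hb HC. destruct (ncount_spectral_list T Ts s HG Hs) as [e [E1 [O1 [G1 _]]]].
  rewrite E1. destruct e as [|u t]. auto. exfalso.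
  destruct (G1 u (or_introl eq_refl)) as [mu [Hmu Su]].
  destruct HG as [HT [Ha _]].
  pose proof (sqnorm_apply_eigvec X X T Ts Ha u mu Su) as Hu. destruct O1 as [hu _].
  specialize (Hb u). rewrite Hu, hu in Hb. lra.
Qed.

Lemma ncount_le_adjoint T Ts s : admissible X X T Ts -> admissible X X Ts T -> 0 < s ->
  ncount H s T <= ncount H s Ts.
Proof.
  intros HG HG' Hs. destruct (ncount_spectral_list T Ts s HG Hs) as [e [E1 [O1 [G1 _]]]].
  destruct (ncount_spectral_list Ts T s HG' Hs) as [e' [E2 [O2 [G2 P2]]]].
  rewrite E1, E2. apply le_INR. rewrite <- (length_map T e).
  destruct HG as [HT [Ha _]]. assert (Hs2 : 0 < s ^ 2) by (apply pow_lt; auto).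
  apply (length_le_of_separation X e' (map T e) (fun y => sqnorm X (Ts y)) (s ^ 2)); auto.
  - apply (image_indep X X T Ts HT Ha (s ^ 2) Hs2 e); auto.
  - intros y Hy _ Hn. apply (sqnorm_adj_gt_on_image_span X X (hilbert_definite H) T Ts HT Ha (s ^ 2) Hs2 e); auto.
Qed.

End CountingProperties.

(** * Finite sums and the direct sum H^L *)

Lemma rsum_nonneg n f : (forall i, (i < n)%nat -> 0 <= f i) -> 0 <= rsum n f.
Proof.
  induction n; simpl; intros. lra. pose proof (H n ltac:(lia)). pose proof (IHn ltac:(intros; apply H; lia)).
  lra.
Qed.

Lemma rsum_ext n f g : (forall i, (i < n)%nat -> f i = g i) -> rsum n f = rsum n g.
Proof.
  induction n; simpl; intros Hfg. auto. rewrite (Hfg n) by lia. rewrite IHn. auto. intros; apply Hfg; lia.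
Qed.

Lemma rsum_le n f g : (forall i, (i < n)%nat -> f i <= g i) -> rsum n f <= rsum n g.
Proof.
  induction n; simpl; intros Hfg. lra. pose proof (Hfg n ltac:(lia)).
  pose proof (IHn ltac:(intros; apply Hfg; lia)). lra.
Qed.

Lemma rsum_const n c : rsum n (fun _ => c) = INR n * c.
Proof. induction n; simpl; auto. lra. rewrite IHn. destruct n; simpl; lra. Qed.

Lemma rsum_plus n f g : rsum n (fun i => f i + g i) = rsum n f + rsum n g.
Proof. induction n; simpl. lra. rewrite IHn. lra. Qed.

Lemma rsum_split_diag n f k : (k < n)%nat ->
  rsum n f = f k + rsum n (fun j => if Nat.eqb k j then 0 else f j).
Proof.
  induction n; intros Hk. lia. simpl. destruct (Nat.eq_dec k n).
  - subst. rewrite Nat.eqb_refl. rewrite (rsum_ext n (fun j => if Nat.eqb n j then 0 else f j) f). lra.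
    intros i Hi. replace (Nat.eqb n i) with false; auto. symmetry; apply Nat.eqb_neq; lia.
  - replace (Nat.eqb k n) with false by (symmetry; apply Nat.eqb_neq; lia). rewrite (IHn ltac:(lia)). lra.
Qed.

Lemma rsum_abs_le n f D : (forall i, (i < n)%nat -> Rabs (f i) <= D) -> Rabs (rsum n f) <= INR n * D.
Proof.
  induction n; intros Hf. simpl. rewrite Rabs_R0. lra.
  rewrite S_INR. simpl rsum. eapply Rle_trans. apply Rabs_triang.
  pose proof (IHn ltac:(intros; apply Hf; lia)). pose proof (Hf n ltac:(lia)). lra.
Qed.

Lemma rsum_ge_term n f k : (k < n)%nat -> (forall i, (i < n)%nat -> 0 <= f i) -> f k <= rsum n f.
Proof.
  intros Hk Hf. rewrite (rsum_split_diag n f k Hk).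
  pose proof (rsum_nonneg n (fun j => if Nat.eqb k j then 0 else f j)).
  assert (0 <= rsum n (fun j => if Nat.eqb k j then 0 else f j)). apply H. intros i Hi.
  destruct (Nat.eqb k i). lra. apply Hf; auto. lra.
Qed.

Lemma rsum_zero_all n f : (forall i, (i < n)%nat -> 0 <= f i) -> rsum n f <= 0 -> forall i, (i < n)%nat ->
  f i = 0.
Proof.
  intros Hf Hs i Hi. pose proof (rsum_ge_term n f i Hi Hf). pose proof (Hf i Hi). lra.
Qed.

Lemma rsum_scal n c f : rsum n (fun i => c * f i) = c * rsum n f.
Proof. induction n; simpl. ring. rewrite IHn. ring. Qed.

Lemma rsum_minus n f g : rsum n (fun i => f i - g i) = rsum n f - rsum n g.
Proof. induction n; simpl. ring. rewrite IHn. ring. Qed.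

Lemma offdiag_sum_bound L f D : 0 <= D -> (forall k j, (k < L)%nat -> (j < L)%nat -> k <> j -> Rabs (f k j) <= D) ->
  Rabs (rsum L (fun k => rsum L (fun j => f k j)) - rsum L (fun k => f k k)) <= INR L * INR L * D.
Proof.
  intros HD Hf.
  rewrite (rsum_ext L _ (fun k => f k k + rsum L (fun j => if Nat.eqb k j then 0 else f k j))).
  2:{ intros k Hk. apply rsum_split_diag; auto. }
  rewrite rsum_plus. set (off := rsum L (fun k => rsum L (fun j => if Nat.eqb k j then 0 else f k j))).
  replace (rsum L (fun k => f k k) + off - rsum L (fun k => f k k)) with off by ring. unfold off.
  rewrite Rmult_assoc. apply rsum_abs_le. intros k Hk. apply rsum_abs_le. intros j Hj.
  destruct (Nat.eqb_spec k j). rewrite Rabs_R0; auto. apply Hf; auto.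
Qed.

Lemma length_flat_map_seq {T} (g : nat -> list T) n :
  INR (length (flat_map g (seq 0 n))) = rsum n (fun k => INR (length (g k))).
Proof.
  induction n. auto. rewrite seq_S, flat_map_app, length_app, plus_INR, IHn. simpl. rewrite app_nil_r. auto.
Qed.

Lemma orth_to_app (X : InnerSpace) l1 l2 x : orth_to X (l1 ++ l2) x -> orth_to X l1 x /\ orth_to X l2 x.
Proof. intros H. split; intros f Hf; apply H; apply in_or_app; auto. Qed.

Lemma orth_to_flat_map (X : InnerSpace) (g : nat -> list X) n x : orth_to X (flat_map g (seq 0 n)) x ->
  forall k, (k < n)%nat -> orth_to X (g k) x.
Proof.
  intros H k Hk f Hf. apply H. apply in_flat_map. exists k. split; auto. apply in_seq. lia.
Qed.

Lemma orthonormal_app (X : InnerSpace) l1 l2 : orthonormal X l1 -> orthonormal X l2 ->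
  (forall u w, In u l1 -> In w l2 -> inner X u w = RtoC 0) -> orthonormal X (l1 ++ l2).
Proof.
  induction l1; simpl; intros H1 H2 H3; auto. destruct H1 as [h1 [h2 h3]]. split; auto. split.
  intros v Hv. apply in_app_or in Hv. destruct Hv; auto.
  apply IHl1; auto.
Qed.

Lemma uniform_bound (X Y : InnerSpace) (L : nat) (Tk : nat -> X -> Y) :
  (forall k, (k < L)%nat -> exists C, 0 < C /\ bounded_by X Y (Tk k) C) ->
    exists C, 0 < C /\ forall k, (k < L)%nat -> bounded_by X Y (Tk k) C.
Proof.
  induction L; intros H. exists 1. split. lra. intros; lia.
  destruct IHL as [C1 [H1 H2]]. intros; apply H; lia. destruct (H L ltac:(lia)) as [C2 [H3 H4]].
  exists (C1 + C2). split. lra. intros k Hk. destruct (Nat.eq_dec k L).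
  subst. apply (bounded_by_mono X Y _ C2); auto. lra. apply (bounded_by_mono X Y _ C1); auto. lra. apply H2.
  lia.
Qed.

Lemma linear_comp (X Y Z : InnerSpace) (T : X -> Y) (U : Y -> Z) : linear X Y T -> linear Y Z U ->
  linear X Z (fun x => U (T x)).
Proof. intros [a1 a2] [b1 b2]. split; intros. rewrite a1, b1; auto. rewrite a2, b2; auto. Qed.

Lemma bounded_by_comp (X Y Z : InnerSpace) (T : X -> Y) (U : Y -> Z) C1 C2 : 0 <= C2 ->
  bounded_by X Y T C1 -> bounded_by Y Z U C2 -> bounded_by X Z (fun x => U (T x)) (C2 * C1).
Proof. intros H2 h1 h2 x. eapply Rle_trans. apply h2. rewrite Rmult_assoc. apply Rmult_le_compat_l; auto. Qed.

Lemma sqnorm_vsum (X : InnerSpace) n (u : nat -> X) :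
  sqnorm X (vsum X n u) = rsum n (fun k => rsum n (fun j => Re (inner X (u k) (u j)))).
Proof.
  unfold sqnorm. rewrite inner_sum_l, re_csum. apply rsum_ext. intros k Hk. rewrite inner_sum_r, re_csum.
  auto.
Qed.

Lemma abs_re_inner_le_of_small (X : InnerSpace) (w z y : X) d : 0 < d -> sqnorm X w <= d * d * sqnorm X z ->
  Rabs (Re (inner X w y)) <= d * (sqnorm X z + sqnorm X y).
Proof.
  intros Hd Hw. pose proof (re_inner_le_amgm X w y (/ d) ltac:(apply Rinv_0_lt_compat; auto)) as H1.
  pose proof (re_inner_le_amgm X w (vopp X y) (/ d) ltac:(apply Rinv_0_lt_compat; auto)) as H2.
  rewrite inner_oppr, re_opp, sqnorm_opp in H2.
  assert (E : sqnorm X y / / d = d * sqnorm X y) by (field; lra).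
  rewrite E in H1, H2.
  assert (/ d * sqnorm X w <= d * sqnorm X z).
  { apply (Rmult_le_reg_l d); auto. rewrite <- Rmult_assoc, Rinv_r by lra. nra. }
  pose proof (sqnorm_ge0 X y). pose proof (sqnorm_ge0 X z).
  apply Rabs_le. split; nra.
Qed.

Section DirectSum.
Variable H : Hilbert.
Variable L : nat.

Definition dirsum : InnerSpace.
Proof.
  refine (Build_InnerSpace (nat -> H) (fun _ => h0 H) (fun f g k => hadd H (f k) (g k)) (fun f k => hopp H (f k))
    (fun c f k => hscal H c (f k)) (fun f g => csum L (fun k => hinner H (f k) (g k))) _ _ _ _ _ _ _ _ _ _ _ _).
  - intros; apply functional_extensionality; intros; apply hadd_assoc.
  - intros; apply functional_extensionality; intros; apply hadd_comm.
  - intros; apply functional_extensionality; intros; apply hadd_0.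
  - intros; apply functional_extensionality; intros; apply hadd_opp.
  - intros; apply functional_extensionality; intros; apply hscal_1.
  - intros; apply functional_extensionality; intros; apply hscal_assoc.
  - intros; apply functional_extensionality; intros; apply hscal_distr_l.
  - intros; apply functional_extensionality; intros; apply hscal_distr_r.
  - intros. rewrite <- csum_add. apply csum_ext. intros; apply hinner_add.
  - intros. rewrite <- csum_scal. apply csum_ext. intros; apply hinner_scal.
  - intros. rewrite <- csum_conj. apply csum_ext. intros; apply hinner_conj.
  - intros. rewrite re_csum. apply rsum_nonneg. intros; apply hinner_pos.
Defined.

Notation X := (of_Hilbert H).

Lemma dirsum_inner (f g : dirsum) : inner dirsum f g = csum L (fun k => inner X (f k) (g k)).
Proof. auto. Qed.

Lemma dirsum_sqnorm (f : dirsum) : sqnorm dirsum f = rsum L (fun k => sqnorm X (f k)).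
Proof. unfold sqnorm. simpl. rewrite re_csum. auto. Qed.

Definition inj (k : nat) (u : H) : dirsum := fun j => if Nat.eqb j k then u else h0 H.

Lemma inner_inj (y : dirsum) k u : (k < L)%nat -> inner dirsum y (inj k u) = inner X (y k) u.
Proof.
  intro Hk. rewrite dirsum_inner. unfold inj.
  rewrite (csum_ext L _ (fun j => if Nat.eqb j k then inner X (y j) u else RtoC 0)).
  apply csum_single; auto.
  intros j Hj. destruct (Nat.eqb j k); auto. apply (inner_0r X).
Qed.

Lemma inner_inj_inj k k' u w : (k < L)%nat -> (k' < L)%nat ->
  inner dirsum (inj k u) (inj k' w) = if Nat.eqb k' k then inner X u w else RtoC 0.
Proof.
  intros Hk Hk'. rewrite inner_inj by auto. unfold inj. destruct (Nat.eqb k' k); auto. apply (inner_0l X).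
Qed.

Variable Ak Aks : nat -> H -> H.
Definition column (x : H) : dirsum := fun k => if Nat.ltb k L then Ak k x else h0 H.
Definition column_adj (y : dirsum) : H := hsum H L (fun k => Aks k (y k)).

Lemma column_linear : (forall k, (k < L)%nat -> linear X X (Ak k)) -> linear X dirsum column.
Proof.
  intros Hl. split; intros; apply functional_extensionality; intro k; unfold column; simpl;
  destruct (Nat.ltb_spec k L).
  - apply (Hl k H0).
  - symmetry; apply hadd_0.
  - apply (Hl k H0).
  - symmetry; apply (vscal_0r X).
Qed.

Lemma column_adjoint : (forall k, (k < L)%nat -> adjoint X X (Ak k) (Aks k)) ->
  adjoint X dirsum column column_adj.
Proof.
  intros Ha x y. rewrite dirsum_inner. unfold column_adj. change (hsum H) with (vsum X). rewrite inner_sum_r.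
  apply csum_ext. intros k Hk. unfold column. rewrite (proj2 (Nat.ltb_lt _ _) Hk). apply Ha; auto.
Qed.

Lemma column_sqnorm x : sqnorm dirsum (column x) = rsum L (fun k => sqnorm X (Ak k x)).
Proof.
  rewrite dirsum_sqnorm. apply rsum_ext. intros k Hk. unfold column. rewrite (proj2 (Nat.ltb_lt _ _) Hk).
  auto.
Qed.

Lemma column_bounded C : 0 < C -> (forall k, (k < L)%nat -> bounded_by X X (Ak k) C) ->
  bounded_by X dirsum column ((INR L + 1) * C).
Proof.
  intros HC Hb x. rewrite column_sqnorm. eapply Rle_trans. apply (rsum_le L _ (fun _ => C * sqnorm X x)).
  intros; apply Hb; auto. rewrite rsum_const. pose proof (sqnorm_ge0 X x). nra.
Qed.

Lemma column_gram_compact : (forall k, (k < L)%nat -> compact_op X X (fun x => Aks k (Ak k x))) ->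
  compact_op X X (gram X dirsum column column_adj).
Proof.
  intros Hc. apply (compact_op_ext X X (fun x => vsum X L (fun k => Aks k (column x k)))).
  intro x. unfold gram, column_adj. reflexivity.
  apply compact_op_vsum. intros k Hk. apply (compact_op_ext X X (fun x => Aks k (Ak k x))); auto.
  intro x. unfold column. rewrite (proj2 (Nat.ltb_lt _ _) Hk). auto.
Qed.

End DirectSum.

(** * Real analysis *)

Lemma exp_le_mono x y : x <= y -> exp x <= exp y.
Proof. intros [H|H]. left; apply exp_increasing; auto. subst; lra. Qed.

Lemma Rpower_gt0 x y : 0 < Rpower x y.
Proof. unfold Rpower. apply exp_pos. Qed.

Lemma Rpower_opp_decr t t0 b : 0 < t -> t < t0 -> 0 < b -> Rpower t0 (- b) < Rpower t (- b).
Proof.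
  intros Ht Htt Hb. unfold Rpower. apply exp_increasing. pose proof (ln_increasing t t0 Ht Htt). nra.
Qed.

Lemma Rpower_Rpower_inv c g : 0 < c -> 0 < g -> Rpower (Rpower c g) (/ g) = c.
Proof. intros Hc Hg. rewrite Rpower_mult. replace (g * / g) with 1 by (field; lra). apply Rpower_1; auto. Qed.

Lemma Rpower_scaling_id s eta g : 0 < s -> 0 < eta -> 0 < g ->
  Rpower s (/ g) * Rpower (eta * s ^ 2) (- / (2 * g)) = Rpower eta (- / (2 * g)).
Proof.
  intros Hs He Hg. unfold Rpower. rewrite <- exp_plus. f_equal.
  rewrite ln_mult, ln_pow by (auto; apply pow_lt; auto). simpl. field. lra.
Qed.

Lemma ln_le_add_of_le_mul x y z : 0 < x -> 0 < y -> 0 < z -> x <= y * z -> ln x <= ln y + ln z.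
Proof. intros Hx Hy Hz Hxyz. rewrite <- ln_mult by auto. apply ln_le; auto. Qed.

Lemma lt_mul_Rpower_of_small t e b K : 0 < t -> 0 < e -> 0 < b -> 0 < K ->
  t < Rpower (e / K) b -> K < e * Rpower t (- / b).
Proof.
  intros Ht He Hb HK Htt.
  assert (E : Rpower (Rpower (e / K) b) (- / b) = K / e).
  { rewrite Rpower_mult. replace (b * - / b) with (Ropp 1) by (field; lra).
    rewrite Rpower_Ropp, Rpower_1 by (apply Rdiv_lt_0_compat; auto). field; lra. }
  pose proof (Rpower_opp_decr t _ (/ b) Ht Htt ltac:(apply Rinv_0_lt_compat; auto)) as D.
  rewrite E in D. apply (Rmult_lt_compat_l e) in D; auto.
  replace (e * (K / e)) with K in D by (field; lra). exact D.
Qed.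

Lemma ln_le_of_Rpower_le t e b y : 0 < t -> 0 < e -> 0 < b -> 1 < y ->
  t <= Rpower e b * Rpower (ln y) (- b) -> ln y <= e * Rpower t (- / b).
Proof.
  intros Ht He Hb Hy Hty. assert (Hly : 0 < ln y) by (rewrite <- ln_1; apply ln_increasing; lra).
  apply ln_le in Hty; auto.
  rewrite ln_mult in Hty by apply Rpower_gt0. rewrite !ln_Rpower in Hty.
  assert (L1 : ln (ln y) <= ln e - / b * ln t).
  { apply (Rmult_le_reg_l b); auto. rewrite Rmult_minus_distr_l, <- Rmult_assoc, Rinv_r, Rmult_1_l by lra. lra. }
  apply exp_le_mono in L1. rewrite exp_ln in L1 by auto.
  unfold Rpower. replace (ln e - / b * ln t) with (ln e + - / b * ln t) in L1 by ring.
  rewrite exp_plus, exp_ln in L1 by auto. exact L1.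
Qed.

(* With [t = eta s^2] one has [s^(1/gamma) t^(-1/(2 gamma)) = eta^(-1/(2 gamma))], so an
   [o(t^(-1/(2 gamma)))] bound on [F t] becomes an [o(s^(-1/gamma))] bound on [F (eta s^2)]. *)
Lemma scaled_bound_small (F : R -> R) gamma eta K : 0 < gamma -> 0 < eta -> 0 <= K ->
  (forall e, 0 < e -> exists t0, 0 < t0 /\ forall t, 0 < t < t0 -> F t <= K + e * Rpower t (- / (2 * gamma))) ->
  forall eps, 0 < eps -> exists d, 0 < d /\ forall s, 0 < s < d ->
    Rpower s (/ gamma) * F (eta * s ^ 2) <= eps.
Proof.
  intros Hg Heta HK HF eps Heps.
  set (R0 := Rpower eta (- / (2 * gamma))).
  assert (HR0 : 0 < R0) by apply Rpower_gt0.
  set (e := (eps / 2) / R0).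
  assert (He : 0 < e) by (unfold e; apply Rdiv_lt_0_compat; lra).
  destruct (HF e He) as [t0 [Ht0 HFt]].
  set (c := (eps / 2) / (K + 1)).
  assert (Hc : 0 < c) by (unfold c; apply Rdiv_lt_0_compat; lra).
  exists (Rmin (Rpower c gamma) (sqrt (t0 / eta))). split.
  { apply Rmin_pos. apply Rpower_gt0. apply sqrt_lt_R0. apply Rdiv_lt_0_compat; auto. }
  intros s [Hs Hsd].
  assert (Hs1 : s < Rpower c gamma) by (pose proof (Rmin_l (Rpower c gamma) (sqrt (t0 / eta))); lra).
  assert (Hs2 : s < sqrt (t0 / eta)) by (pose proof (Rmin_r (Rpower c gamma) (sqrt (t0 / eta))); lra).
  set (t := eta * s ^ 2).
  assert (Ht : 0 < t < t0).
  { unfold t. split. apply Rmult_lt_0_compat; auto. apply pow_lt; auto.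
    assert (Hss : s * s < sqrt (t0 / eta) * sqrt (t0 / eta)) by nra.
    rewrite sqrt_sqrt in Hss by (left; apply Rdiv_lt_0_compat; auto).
    apply (Rmult_lt_compat_l eta) in Hss; auto. replace (eta * (t0 / eta)) with t0 in Hss by (field; lra).
    simpl. lra. }
  assert (Hsg : 0 < Rpower s (/ gamma)) by apply Rpower_gt0.
  assert (Hsc : Rpower s (/ gamma) < c).
  { rewrite <- (Rpower_Rpower_inv c gamma) by auto. apply Rlt_Rpower_l. apply Rinv_0_lt_compat; auto. lra. }
  assert (Id : Rpower s (/ gamma) * Rpower t (- / (2 * gamma)) = R0) by (unfold t, R0; apply Rpower_scaling_id; auto).
  eapply Rle_trans. apply Rmult_le_compat_l. lra. exact (HFt t Ht).
  rewrite Rmult_plus_distr_l.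
  replace (Rpower s (/ gamma) * (e * Rpower t (- / (2 * gamma)))) with (e * R0) by (rewrite <- Id; ring).
  assert (e * R0 = eps / 2) by (unfold e; field; lra).
  assert (Rpower s (/ gamma) * K <= c * K) by (apply Rmult_le_compat_r; lra).
  assert (c * K <= eps / 2).
  { unfold c. apply (Rmult_le_reg_r (K + 1)). lra.
    replace (eps / 2 / (K + 1) * K * (K + 1)) with (eps / 2 * K) by (field; lra). nra. }
  lra.
Qed.

Lemma uniform_threshold (P : nat -> R -> Prop) n : (forall k, (k < n)%nat -> exists t0, 0 < t0 /\ P k t0) ->
  (forall k t t', 0 < t' -> t' <= t -> P k t -> P k t') -> exists t0, 0 < t0 /\ forall k, (k < n)%nat ->
    P k t0.
Proof.
  intros H Hm. induction n. exists 1. split. lra. intros; lia.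
  destruct IHn as [t1 [h1 h2]]. intros; apply H; lia.
  destruct (H n ltac:(lia)) as [t2 [h3 h4]].
  exists (Rmin t1 t2). split. apply Rmin_pos; auto. intros k Hk. destruct (Nat.eq_dec k n).
  subst. apply (Hm n t2); auto. apply Rmin_pos; auto. apply Rmin_r.
  apply (Hm k t1); auto. apply Rmin_pos; auto. apply Rmin_l. apply h2; lia.
Qed.

(** * Counting functions of operators in Sigma^0_b *)

Section Sigma0Counting.
Variable H : Hilbert.
Notation X := (of_Hilbert H).

Lemma sval_ge_of_ncount T Ts C t m : admissible X X T Ts -> 0 < C -> bounded_by X X T C -> 0 < t ->
  (1 <= m)%nat -> INR m <= ncount H t T -> t <= sval H m T.
Proof.
  intros HG HC Hb Ht Hm Hc. unfold sval.
  set (E := fun s => 0 < s /\ ncount H s T < INR m).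
  set (s_big := sqrt C + 1).
  assert (Hs0 : E s_big).
  { pose proof (sqrt_pos C). split. unfold s_big; lra.
    rewrite (ncount_eq0_large H T Ts s_big C HG) by
      (unfold s_big; try lra; auto; pose proof (sqrt_sqrt C ltac:(lra)); simpl; nra).
    apply lt_0_INR. lia. }
  assert (Hlb : forall s, E s -> t <= s).
  { intros s [Hs Hcs]. destruct (Rle_dec t s) as [|Hts]; auto. exfalso.
    pose proof (ncount_antitone H T Ts s t HG Hs ltac:(lra)). lra. }
  destruct (Glb_Rbar_correct E) as [lbE glbE].
  assert (A1 : Rbar_le (Glb_Rbar E) s_big) by (apply lbE; auto).
  assert (A2 : Rbar_le t (Glb_Rbar E)) by (apply glbE; intros x Hx; apply Hlb; auto).
  destruct (Glb_Rbar E) as [l| |]; simpl in *; try contradiction; auto.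
Qed.

(* [t <= s_m] for [m = n(t,T)], and [s_m <= e^b (ln (m+1))^(-b)] for large [m]. *)
Lemma log_ncount_small_of_Sigma0 T Ts b : admissible X X T Ts -> 0 < b -> Sigma0 H b T ->
  forall e, 0 < e -> exists t0, 0 < t0 /\ forall t, 0 < t < t0 ->
    ln (ncount H t T + 1) <= e * Rpower t (- / b).
Proof.
  intros HG Hb [_ HS] e He.
  pose proof HG as [HT [Ha [[C [HC Hbd]] Hc]]].
  destruct (HS (Rpower e b) (Rpower_gt0 e b)) as [N HN].
  set (N' := max N 1).
  assert (HlnN : 0 < ln (INR N' + 1)).
  { rewrite <- ln_1. apply ln_increasing. lra.
    assert (1 <= INR N') by (apply (le_INR 1); unfold N'; lia). lra. }
  exists (Rpower (e / ln (INR N' + 1)) b). split. apply Rpower_gt0.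
  intros t [Ht Htt].
  destruct (ncount_spectral_list H T Ts t HG Ht) as [el [Em _]]. rewrite Em. set (m := length el).
  destruct (Compare_dec.lt_dec m N') as [Hlt|Hge].
  - apply Rle_trans with (ln (INR N' + 1)).
    + apply ln_le. pose proof (pos_INR m); lra. apply Rplus_le_compat_r, le_INR. lia.
    + left. apply lt_mul_Rpower_of_small; auto.
  - assert (Hm1 : (1 <= m)%nat) by (unfold N' in *; lia).
    apply ln_le_of_Rpower_le; auto.
    + pose proof (le_INR 1 m Hm1). simpl in *. lra.
    + pose proof (sval_ge_of_ncount T Ts C t m HG HC Hbd Ht Hm1 ltac:(rewrite Em; apply Rle_refl)).
      pose proof (HN m ltac:(unfold N' in *; lia)). pose proof (Rle_abs (sval H m T)). lra.
Qed.

End Sigma0Counting.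

(** * Upper and lower limits at 0+ *)

Lemma le_of_approx_above l y : 0 <= y -> (forall e, 0 < e -> l <= (1 + e) * (y + e)) -> l <= y.
Proof.
  intros Hy H. destruct (Rle_dec l y) as [|Hn]; auto. exfalso.
  set (e := Rmin 1 ((l - y) / (2 * (y + 2)))).
  assert (He : 0 < e). { unfold e. apply Rmin_pos. lra. apply Rdiv_lt_0_compat; lra. }
  assert (He1 : e <= 1) by apply Rmin_l.
  assert (He2 : e <= (l - y) / (2 * (y + 2))) by apply Rmin_r.
  specialize (H e He).
  assert (e * (y + 2) <= (l - y) / 2).
  { apply (Rmult_le_compat_r (y + 2)) in He2; try lra. replace ((l - y) / (2 * (y + 2)) * (y + 2)) with ((l - y) / 2) in He2 by (field; lra). lra. }
  nra.
Qed.

Lemma ge_of_approx_below l y : 0 < y -> (forall e, 0 < e -> y / (1 + e) - e <= l) -> y <= l.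
Proof.
  intros Hy H. destruct (Rle_dec y l) as [|Hn]; auto. exfalso.
  set (e := Rmin 1 ((y - l) / (2 * (y + 2)))).
  assert (He : 0 < e). { unfold e. apply Rmin_pos. lra. apply Rdiv_lt_0_compat; lra. }
  assert (He2 : e <= (y - l) / (2 * (y + 2))) by apply Rmin_r.
  specialize (H e He).
  assert (e * (y + 2) <= (y - l) / 2).
  { apply (Rmult_le_compat_r (y + 2)) in He2; try lra. replace ((y - l) / (2 * (y + 2)) * (y + 2)) with ((y - l) / 2) in He2 by (field; lra). lra. }
  assert (y / (1 + e) >= y - y * e).
  { apply Rle_ge. apply (Rmult_le_reg_r (1 + e)). lra. replace (y / (1 + e) * (1 + e)) with y by (field; lra). nra. }
  nra.
Qed.

Definition dilation_dominated (f g : R -> R) := forall e, 0 < e -> exists lam, 0 < lam /\ exists d, 0 < d /\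
  forall s, 0 < s < d -> f s <= (1 + e) * (g (lam * s) + e).

Lemma Lub_Rbar_le (E : R -> Prop) (z : R) : (forall x, E x -> x <= z) -> Rbar_le (Lub_Rbar E) z.
Proof. intros H. destruct (Lub_Rbar_correct E) as [_ H2]. apply H2. intros x Hx. apply H; auto. Qed.

Lemma le_Glb_Rbar (E : R -> Prop) (z : R) : (forall x, E x -> z <= x) -> Rbar_le z (Glb_Rbar E).
Proof. intros H. destruct (Glb_Rbar_correct E) as [_ H2]. apply H2. intros x Hx. apply H; auto. Qed.

Lemma le_Lub_Rbar (E : R -> Prop) x : E x -> Rbar_le x (Lub_Rbar E).
Proof. intros H. destruct (Lub_Rbar_correct E) as [H1 _]. apply H1; auto. Qed.

Lemma Glb_Rbar_le (E : R -> Prop) x : E x -> Rbar_le (Glb_Rbar E) x.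
Proof. intros H. destruct (Glb_Rbar_correct E) as [H1 _]. apply H1; auto. Qed.

Lemma limsup0_le_of_dominated f g : (forall s, 0 < s -> 0 <= g s) -> dilation_dominated f g ->
  Rbar_le (limsup0 f) (limsup0 g).
Proof.
  intros Hg Hyp. unfold limsup0.
  destruct (Glb_Rbar_correct (fun y => exists d, 0 < d /\
    Rbar_le (Lub_Rbar (fun x => exists s, 0 < s < d /\ x = g s)) y)) as [_ G2].
  apply G2. intros y [dl [Hdl Hy]].
  assert (Hgy : forall s, 0 < s < dl -> g s <= y).
  { intros s Hs. pose proof (le_Lub_Rbar (fun x => exists s, 0 < s < dl /\ x = g s) (g s) ltac:(exists s; auto)).
    pose proof (Rbar_le_trans _ _ _ H Hy). simpl in H0. auto. }
  assert (Hy0 : 0 <= y). { pose proof (Hgy (dl / 2) ltac:(lra)). pose proof (Hg (dl/2) ltac:(lra)). lra. }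
  assert (Hb : forall e, 0 < e -> Rbar_le (Glb_Rbar (fun y => exists d, 0 < d /\
    Rbar_le (Lub_Rbar (fun x => exists s, 0 < s < d /\ x = f s)) y)) ((1 + e) * (y + e))).
  { intros e He. apply Glb_Rbar_le. destruct (Hyp e He) as [lam [Hlam [d [Hd Hf]]]].
    exists (Rmin d (dl / lam)). split. apply Rmin_pos; auto. apply Rdiv_lt_0_compat; auto.
    apply Lub_Rbar_le. intros x [s [Hs ->]].
    assert (s < d) by (pose proof (Rmin_l d (dl / lam)); lra).
    assert (s < dl / lam) by (pose proof (Rmin_r d (dl / lam)); lra).
    pose proof (Hf s ltac:(lra)).
    assert (lam * s < dl).
    { apply (Rmult_lt_compat_l lam) in H0; auto. replace (lam * (dl / lam)) with dl in H0 by (field; lra). auto. }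
    pose proof (Hgy (lam * s) ltac:(split; [nra|auto])). nra. }
  revert Hb. match goal with |- _ -> Rbar_le ?a _ => generalize a end. intros r Hb.
  destruct r as [l| |].
  - simpl. apply le_of_approx_above. exact Hy0. intros e He. specialize (Hb e He). simpl in Hb. exact Hb.
  - specialize (Hb 1 Rlt_0_1). simpl in Hb. contradiction.
  - simpl. auto.
Qed.

Lemma liminf0_le_of_dominated f g : (forall s, 0 < s -> 0 <= g s) -> dilation_dominated f g ->
  Rbar_le (liminf0 f) (liminf0 g).
Proof.
  intros Hg Hyp. unfold liminf0.
  set (Sg := fun y : R => exists d, 0 < d /\ Rbar_le y (Glb_Rbar (fun x => exists s, 0 < s < d /\ x = g s))).
  assert (H0g : Rbar_le 0 (Lub_Rbar Sg)).
  { apply le_Lub_Rbar. exists 1. split. lra. apply le_Glb_Rbar. intros x [s [Hs ->]]. apply Hg. lra. }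
  destruct (Lub_Rbar_correct (fun y => exists d, 0 < d /\
    Rbar_le y (Glb_Rbar (fun x => exists s, 0 < s < d /\ x = f s)))) as [_ G2].
  apply G2. intros y [dl [Hdl Hy]].
  assert (Hfy : forall s, 0 < s < dl -> y <= f s).
  { intros s Hs. pose proof (Glb_Rbar_le (fun x => exists s, 0 < s < dl /\ x = f s) (f s) ltac:(exists s; auto)).
    pose proof (Rbar_le_trans _ _ _ Hy H). simpl in H0. auto. }
  destruct (Rle_dec y 0) as [Hy0|Hy0].
  { eapply Rbar_le_trans. 2: exact H0g. simpl. auto. }
  assert (Hb : forall e, 0 < e -> Rbar_le (y / (1 + e) - e) (Lub_Rbar Sg)).
  { intros e He. apply le_Lub_Rbar. destruct (Hyp e He) as [lam [Hlam [d [Hd Hf]]]].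
    exists (lam * Rmin d dl). split. apply Rmult_lt_0_compat; auto. apply Rmin_pos; auto.
    apply le_Glb_Rbar. intros x [s [Hs ->]].
    set (u := s / lam).
    assert (Hu : 0 < u < Rmin d dl).
    { unfold u. split. apply Rdiv_lt_0_compat; lra. apply (Rmult_lt_reg_l lam); auto.
      replace (lam * (s / lam)) with s by (field; lra). lra. }
    assert (u < d) by (pose proof (Rmin_l d dl); lra). assert (u < dl) by (pose proof (Rmin_r d dl); lra).
    pose proof (Hf u ltac:(lra)) as F1. pose proof (Hfy u ltac:(lra)) as F2.
    replace (lam * u) with s in F1 by (unfold u; field; lra).
    assert (y <= (1 + e) * (g s + e)) by lra.
    assert (y / (1 + e) <= g s + e).
    { apply (Rmult_le_reg_l (1 + e)). lra. replace ((1 + e) * (y / (1 + e))) with y by (field; lra). lra. }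
    lra. }
  revert Hb H0g. generalize (Lub_Rbar Sg). intros r Hb H0g.
  destruct r as [l| |].
  - simpl. apply ge_of_approx_below. lra. intros e He. specialize (Hb e He). simpl in Hb. exact Hb.
  - simpl. auto.
  - simpl in H0g. contradiction.
Qed.

Lemma limsup0_liminf0_eq f g : (forall s, 0 < s -> 0 <= f s) -> (forall s, 0 < s -> 0 <= g s) ->
  dilation_dominated f g -> dilation_dominated g f ->
  limsup0 f = limsup0 g /\ liminf0 f = liminf0 g.
Proof.
  intros Hf Hg H1 H2. split; apply Rbar_le_antisym.
  apply limsup0_le_of_dominated; auto. apply limsup0_le_of_dominated; auto.
  apply liminf0_le_of_dominated; auto. apply liminf0_le_of_dominated; auto.
Qed.

(** * Comparison of A with the family A_k *)

Section Decomposition.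
Variable H : Hilbert.
Notation X := (of_Hilbert H).
Variable L : nat.
Hypothesis HL1 : (1 <= L)%nat.
Variable A : H -> H.
Variables Ak Aks : nat -> H -> H.
Hypothesis HA : is_compact_op H A.
Hypothesis HAk : forall k, (k < L)%nat -> is_compact_op H (Ak k).
Hypothesis HAdj : forall k, (k < L)%nat -> is_adjoint H (Ak k) (Aks k).
Hypothesis HAsum : forall x, A x = hsum H L (fun k => Ak k x).

Lemma INR_L_ge1 : 1 <= INR L.
Proof. apply (le_INR 1); auto. Qed.

Lemma Ak_linear k : (k < L)%nat -> linear X X (Ak k).
Proof. intro Hk. exact (proj1 (HAk k Hk)). Qed.

Lemma Ak_compact k : (k < L)%nat -> compact_op X X (Ak k).
Proof. intro Hk. exact (proj2 (HAk k Hk)). Qed.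

Lemma Ak_adjoint k : (k < L)%nat -> adjoint X X (Ak k) (Aks k).
Proof. intro Hk. exact (HAdj k Hk). Qed.

Lemma Akstar_adjoint k : (k < L)%nat -> adjoint X X (Aks k) (Ak k).
Proof. intros Hk x y. rewrite (adjoint_sym X X (Ak k) (Aks k) (Ak_adjoint k Hk)). auto. Qed.

Lemma Akstar_linear k : (k < L)%nat -> linear X X (Aks k).
Proof.
  intro Hk. apply (adjoint_linear X X (hilbert_definite H) (Ak k)). apply Ak_linear; auto.
  apply Ak_adjoint; auto.
Qed.

Lemma Ak_uniform_bound : exists C, 0 < C /\ forall k, (k < L)%nat ->
  bounded_by X X (Ak k) C /\ bounded_by X X (Aks k) C.
Proof.
  destruct (uniform_bound X X L Ak) as [C [HC Hb]].
  { intros k Hk. apply compact_op_bounded. apply hilbert_definite. apply Ak_linear; auto. apply Ak_compact; auto. }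
  exists C. split; auto. intros k Hk. split; auto. apply (adjoint_bounded_by X X (Ak k)); auto.
  apply Ak_adjoint; auto.
Qed.

Definition Astar (y : H) : H := hsum H L (fun k => Aks k y).

Lemma A_adjoint : adjoint X X A Astar.
Proof.
  intros x y. rewrite HAsum. unfold Astar. change (hsum H) with (vsum X).
  rewrite inner_sum_l, inner_sum_r. apply csum_ext. intros k Hk. apply Ak_adjoint; auto.
Qed.

Lemma A_admissible : admissible X X A Astar.
Proof.
  destruct HA as [HAl HAc].
  destruct (compact_op_bounded X X (hilbert_definite H) A HAl HAc) as [C [HC Hb]].
  split; [auto | split; [apply A_adjoint | split; [eauto |]]].
  apply (compact_op_compl X X X A Astar C); auto.
  - apply (adjoint_linear X X (hilbert_definite H) A); auto. apply A_adjoint.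
  - apply (adjoint_bounded_by X X A); auto. apply A_adjoint.
Qed.

Lemma Ak_admissible k : (k < L)%nat -> admissible X X (Ak k) (Aks k).
Proof.
  intro Hk. destruct Ak_uniform_bound as [C [HC Hb]].
  split. apply Ak_linear; auto. split. apply Ak_adjoint; auto. split. exists C. split; auto. apply Hb; auto.
  apply (compact_op_compl X X X (Ak k) (Aks k) C). apply Ak_compact; auto. apply Akstar_linear; auto. auto.
  apply Hb; auto.
Qed.

Lemma Akstar_admissible k : (k < L)%nat -> admissible X X (Aks k) (Ak k).
Proof.
  intro Hk. destruct Ak_uniform_bound as [C [HC Hb]].
  split. apply Akstar_linear; auto. split. apply Akstar_adjoint; auto. split. exists C. split; auto.
  apply Hb; auto.
  apply (compact_op_compr X X X (Aks k) (Ak k) C). apply Ak_compact; auto. auto. apply Hb; auto.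
Qed.

Definition AstarA k j (x : H) : H := Aks k (Ak j x).
Definition AstarA_adj k j (y : H) : H := Aks j (Ak k y).
Definition AAstar k j (x : H) : H := Ak j (Aks k x).
Definition AAstar_adj k j (y : H) : H := Ak k (Aks j y).

Lemma AstarA_admissible k j : (k < L)%nat -> (j < L)%nat -> admissible X X (AstarA k j) (AstarA_adj k j).
Proof.
  intros Hk Hj. destruct Ak_uniform_bound as [C [HC Hb]].
  split. unfold AstarA. apply (linear_comp X X X (Ak j) (Aks k)). apply Ak_linear; auto.
  apply Akstar_linear; auto.
  split. intros x y. unfold AstarA, AstarA_adj. rewrite (adjoint_sym X X (Ak k) (Aks k) (Ak_adjoint k Hk)).
  apply Ak_adjoint; auto.
  split. exists (C * C). split. nra. unfold AstarA. apply (bounded_by_comp X X X (Ak j) (Aks k)). lra.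
  apply Hb; auto. apply Hb; auto.
  unfold gram, AstarA, AstarA_adj.
  apply (compact_op_compl X X X (fun x => Ak k (Aks k (Ak j x))) (Aks j) C).
  apply (compact_op_compl X X X (fun x => Aks k (Ak j x)) (Ak k) C).
  apply (compact_op_compl X X X (Ak j) (Aks k) C).
  apply Ak_compact; auto. apply Akstar_linear; auto. auto. apply Hb; auto.
  apply Ak_linear; auto. auto. apply Hb; auto. apply Akstar_linear; auto. auto. apply Hb; auto.
Qed.

Lemma AAstar_admissible k j : (k < L)%nat -> (j < L)%nat -> admissible X X (AAstar k j) (AAstar_adj k j).
Proof.
  intros Hk Hj. destruct Ak_uniform_bound as [C [HC Hb]].
  split. unfold AAstar. apply (linear_comp X X X (Aks k) (Ak j)). apply Akstar_linear; auto.
  apply Ak_linear; auto.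
  split. intros x y. unfold AAstar, AAstar_adj. rewrite (Ak_adjoint j Hj). apply Akstar_adjoint; auto.
  split. exists (C * C). split. nra. unfold AAstar. apply (bounded_by_comp X X X (Aks k) (Ak j)). lra.
  apply Hb; auto. apply Hb; auto.
  unfold gram, AAstar, AAstar_adj.
  apply (compact_op_compr X X X (fun x => Aks j (Ak j (Aks k x))) (Ak k) (C * (C * C))).
  apply Ak_compact; auto. apply Rmult_lt_0_compat; nra.
  apply (bounded_by_comp X X X (fun x => Ak j (Aks k x)) (Aks j)). lra.
  apply (bounded_by_comp X X X (Aks k) (Ak j)). lra. apply Hb; auto. apply Hb; auto. apply Hb; auto.
Qed.

Notation Y := (dirsum H L).
Definition col := column H L Ak.
Definition col_adj := column_adj H L Aks.

Lemma col_admissible : admissible X Y col col_adj.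
Proof.
  destruct Ak_uniform_bound as [C [HC Hb]].
  split. apply column_linear. intros; apply Ak_linear; auto.
  split. apply column_adjoint. intros; apply Ak_adjoint; auto.
  split. exists ((INR L + 1) * C). split. pose proof (pos_INR L). nra. apply column_bounded; auto.
  intros; apply Hb; auto.
  apply column_gram_compact. intros k Hk. apply (compact_op_compl X X X (Ak k) (Aks k) C).
  apply Ak_compact; auto. apply Akstar_linear; auto. auto. apply Hb; auto.
Qed.

Definition is_counting_list (T Ts : H -> H) (s : R) (e : list X) :=
  ncount H s T = INR (length e) /\ is_spectral_list X X T Ts (s ^ 2) e.
Definition counting_list T Ts s := epsilon (inhabits nil) (is_counting_list T Ts s).

Lemma counting_list_spec T Ts s : admissible X X T Ts -> 0 < s ->
  is_counting_list T Ts s (counting_list T Ts s).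
Proof. intros HG Hs. unfold counting_list. apply epsilon_spec. apply ncount_spectral_list; auto. Qed.

Definition col_list a := epsilon (inhabits nil) (is_spectral_list X Y col col_adj a).

Lemma col_list_spec a : 0 < a -> is_spectral_list X Y col col_adj a (col_list a).
Proof.
  intros Ha. unfold col_list. apply epsilon_spec.
  apply admissible_spectral_list; auto. apply hilbert_definite. apply col_admissible.
Qed.

(* Eigenvectors of the cross terms [A_k^* A_j] (resp. [A_j A_k^*], embedded in the [k]-th
   summand of H^L), [k <> j], with singular values above [d]. *)
Definition AstarA_vectors d := flat_map (fun k => flat_map (fun j =>
  if Nat.eqb k j then nil else counting_list (AstarA k j) (AstarA_adj k j) d) (seq 0 L)) (seq 0 L).
Definition AstarA_count d := rsum L (fun k => rsum L (fun j => if Nat.eqb k j then 0 else ncount H d (AstarA k j))).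
Definition AAstar_vectors d : list Y := flat_map (fun k => flat_map (fun j =>
  if Nat.eqb k j then nil else map (inj H L k) (counting_list (AAstar k j) (AAstar_adj k j) d)) (seq 0 L)) (seq 0 L).
Definition AAstar_count d := rsum L (fun k => rsum L (fun j => if Nat.eqb k j then 0 else ncount H d (AAstar k j))).

Lemma length_AstarA_vectors d : 0 < d -> INR (length (AstarA_vectors d)) = AstarA_count d.
Proof.
  intro Hd. unfold AstarA_vectors, AstarA_count. rewrite length_flat_map_seq. apply rsum_ext. intros k Hk.
  rewrite length_flat_map_seq. apply rsum_ext. intros j Hj.
  destruct (Nat.eqb_spec k j). auto.
  destruct (counting_list_spec (AstarA k j) (AstarA_adj k j) d (AstarA_admissible k j Hk Hj) Hd) as [E _].
  auto.
Qed.

Lemma length_AAstar_vectors d : 0 < d -> INR (length (AAstar_vectors d)) = AAstar_count d.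
Proof.
  intro Hd. unfold AAstar_vectors, AAstar_count. rewrite length_flat_map_seq. apply rsum_ext. intros k Hk.
  rewrite length_flat_map_seq. apply rsum_ext. intros j Hj.
  destruct (Nat.eqb_spec k j). auto. rewrite length_map.
  destruct (counting_list_spec (AAstar k j) (AAstar_adj k j) d (AAstar_admissible k j Hk Hj) Hd) as [E _].
  auto.
Qed.

Lemma orth_AstarA_vectors d x : 0 < d -> orth_to X (AstarA_vectors d) x ->
  forall k j, (k < L)%nat -> (j < L)%nat -> k <> j -> sqnorm X (AstarA k j x) <= d * d * sqnorm X x.
Proof.
  intros Hd Ho k j Hk Hj Hkj. pose proof (orth_to_flat_map X _ L x Ho k Hk) as O1.
  pose proof (orth_to_flat_map X _ L x O1 j Hj) as O2. simpl in O2.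
  replace (Nat.eqb k j) with false in O2 by (symmetry; apply Nat.eqb_neq; auto).
  destruct (counting_list_spec (AstarA k j) (AstarA_adj k j) d (AstarA_admissible k j Hk Hj) Hd) as [_ [_ [_ P]]].
  replace (d * d) with (d ^ 2) by ring. apply P; auto.
Qed.

Lemma orth_AAstar_vectors d (y : Y) : 0 < d -> orth_to Y (AAstar_vectors d) y ->
  forall k j, (k < L)%nat -> (j < L)%nat -> k <> j -> sqnorm X (AAstar k j (y k)) <= d * d * sqnorm X (y k).
Proof.
  intros Hd Ho k j Hk Hj Hkj. pose proof (orth_to_flat_map Y _ L y Ho k Hk) as O1.
  pose proof (orth_to_flat_map Y _ L y O1 j Hj) as O2. simpl in O2.
  replace (Nat.eqb k j) with false in O2 by (symmetry; apply Nat.eqb_neq; auto).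
  destruct (counting_list_spec (AAstar k j) (AAstar_adj k j) d (AAstar_admissible k j Hk Hj) Hd) as [_ [_ [_ P]]].
  replace (d * d) with (d ^ 2) by ring. apply P; auto.
  intros f Hf. rewrite <- (inner_inj H L y k f Hk). apply O2. apply in_map; auto.
Qed.

Lemma sqnorm_A_near_col d x : 0 < d -> orth_to X (AstarA_vectors d) x ->
  Rabs (sqnorm X (A x) - sqnorm Y (col x)) <= INR L * INR L * (2 * d * sqnorm X x).
Proof.
  intros Hd Ho. rewrite HAsum. change (hsum H) with (vsum X). rewrite sqnorm_vsum.
  unfold col. rewrite column_sqnorm. apply offdiag_sum_bound. pose proof (sqnorm_ge0 X x). nra.
  intros k j Hk Hj Hkj. rewrite (Ak_adjoint k Hk). rewrite re_inner_sym. fold (AstarA k j x).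
  replace (2 * d * sqnorm X x) with (d * (sqnorm X x + sqnorm X x)) by ring.
  apply abs_re_inner_le_of_small; auto. apply orth_AstarA_vectors; auto.
Qed.

Lemma sqnorm_col_adj_near_sum d (y : Y) : 0 < d -> orth_to Y (AAstar_vectors d) y ->
  Rabs (sqnorm X (col_adj y) - rsum L (fun k => sqnorm X (Aks k (y k)))) <= INR L * INR L * (2 * d * sqnorm Y y).
Proof.
  intros Hd Ho. unfold col_adj, column_adj. change (hsum H) with (vsum X). rewrite sqnorm_vsum.
  apply offdiag_sum_bound. pose proof (sqnorm_ge0 Y y). nra.
  intros k j Hk Hj Hkj. rewrite <- (Ak_adjoint j Hj). fold (AAstar k j (y k)).
  eapply Rle_trans. apply (abs_re_inner_le_of_small X (AAstar k j (y k)) (y k) (y j) d Hd).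
  apply orth_AAstar_vectors; auto.
  rewrite dirsum_sqnorm.
  pose proof (rsum_ge_term L (fun k => sqnorm X (y k)) k Hk ltac:(intros; apply sqnorm_ge0)).
  pose proof (rsum_ge_term L (fun k => sqnorm X (y k)) j Hj ltac:(intros; apply sqnorm_ge0)). simpl in *. nra.
Qed.

Definition Akstar_list k s := counting_list (Aks k) (Ak k) s.
Definition col_adj_list s : list Y := flat_map (fun k => map (inj H L k) (Akstar_list k s)) (seq 0 L).

Lemma Akstar_list_spec k s : (k < L)%nat -> 0 < s -> is_counting_list (Aks k) (Ak k) s (Akstar_list k s).
Proof. intros Hk Hs. apply counting_list_spec; auto. apply Akstar_admissible; auto. Qed.

Lemma orthonormal_map_inj k l : (k < L)%nat -> orthonormal X l -> orthonormal Y (map (inj H L k) l).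
Proof.
  intros Hk. induction l as [|u t IH]; cbn [orthonormal map]; auto. intros [h1 [h2 h3]].
  split; [|split]; auto.
  - unfold sqnorm. rewrite inner_inj_inj, Nat.eqb_refl by auto. apply h1.
  - intros v Hv. apply in_map_iff in Hv. destruct Hv as [w [<- Hw]].
    rewrite inner_inj_inj, Nat.eqb_refl by auto. auto.
Qed.

Lemma orthonormal_col_adj_list s : 0 < s -> orthonormal Y (col_adj_list s).
Proof.
  intros Hs. unfold col_adj_list.
  assert (Hn : forall n, (n <= L)%nat -> orthonormal Y (flat_map (fun k => map (inj H L k) (Akstar_list k s)) (seq 0 n))).
  { induction n; intros Hn. simpl; auto. rewrite seq_S, flat_map_app. simpl. rewrite app_nil_r.
    apply orthonormal_app. apply IHn; lia. apply orthonormal_map_inj. lia.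
    destruct (Akstar_list_spec n s ltac:(lia) Hs) as [_ [O _]]; auto.
    intros u w Hu Hw. apply in_flat_map in Hu. destruct Hu as [k' [Hk' Hu]]. apply in_seq in Hk'.
    apply in_map_iff in Hu. destruct Hu as [u' [<- _]]. apply in_map_iff in Hw. destruct Hw as [w' [<- _]].
    rewrite inner_inj_inj by lia. replace (Nat.eqb n k') with false; auto. symmetry; apply Nat.eqb_neq; lia. }
  apply Hn; lia.
Qed.

Lemma length_col_adj_list s : 0 < s -> INR (length (col_adj_list s)) = rsum L (fun k => ncount H s (Ak k)).
Proof.
  intros Hs. unfold col_adj_list. rewrite length_flat_map_seq. apply rsum_ext. intros k Hk.
  rewrite length_map.
  destruct (Akstar_list_spec k s Hk Hs) as [E _].
  transitivity (ncount H s (Aks k)). rewrite E; reflexivity. apply Rle_antisym.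
  - apply ncount_le_adjoint; auto. apply Akstar_admissible; auto. apply Ak_admissible; auto.
  - apply ncount_le_adjoint; auto. apply Ak_admissible; auto. apply Akstar_admissible; auto.
Qed.

Lemma orth_col_adj_list s (y : Y) : orth_to Y (col_adj_list s) y ->
  forall k, (k < L)%nat -> orth_to X (Akstar_list k s) (y k).
Proof.
  intros Ho k Hk f Hf. rewrite <- (inner_inj H L y k f Hk). apply (orth_to_flat_map Y _ L y Ho k Hk).
  apply in_map; auto.
Qed.

Lemma span_col_adj_list s (y : Y) : in_span Y (col_adj_list s) y ->
  forall k, (k < L)%nat -> in_span X (Akstar_list k s) (y k).
Proof.
  revert y. apply (span_ind Y (fun y => forall k, (k < L)%nat -> in_span X (Akstar_list k s) (y k))).
  - intros; apply in_span_0.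
  - intros a b Ha Hb k Hk. apply (in_span_add X); auto.
  - intros c a Ha k Hk. apply (in_span_scal X); auto.
  - intros u Hu k Hk. apply in_flat_map in Hu. destruct Hu as [k' [Hk' Hu]]. apply in_map_iff in Hu.
    destruct Hu as [u' [<- Hu']]. unfold inj. destruct (Nat.eqb_spec k k'). subst. apply in_span_In; auto.
    apply in_span_0.
Qed.

Lemma ncount_A_le_col s a d : 0 < s -> 0 < a -> 0 < d -> a + INR L * INR L * (2 * d) <= s ^ 2 ->
  ncount H s A <= INR (length (col_list a)) + AstarA_count d.
Proof.
  intros Hs Ha Hd Hc. destruct (counting_list_spec A Astar s A_admissible Hs) as [E [O [G P]]]. rewrite E.
  destruct (col_list_spec a Ha) as [OB [GB PB]].
  rewrite <- (length_AstarA_vectors d Hd), <- plus_INR, <- length_app. apply le_INR.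
  destruct A_admissible as [HT [HaA _]].
  apply (length_le_of_separation X (col_list a ++ AstarA_vectors d) (counting_list A Astar s)
    (fun x => sqnorm X (A x)) (s ^ 2)).
  - intros x Hx. destruct (orth_to_app X _ _ x Hx) as [h1 h2]. pose proof (PB x h1).
    pose proof (sqnorm_A_near_col d x Hd h2) as Hnear. apply Rabs_le_between in Hnear.
    pose proof (sqnorm_ge0 X x).
    assert ((a + INR L * INR L * (2 * d)) * sqnorm X x <= s ^ 2 * sqnorm X x) by (apply Rmult_le_compat_r; auto). nra.
  - apply orthonormal_indep; auto.
  - intros x Hx _ Hn.
    apply (sqnorm_apply_gt_on_span X X (hilbert_definite H) A Astar HT HaA (s ^ 2) (pow_lt s 2 Hs) _ O G x Hx Hn).
Qed.

Lemma col_le_ncount_A s a d : 0 < s -> 0 < a -> 0 < d -> s ^ 2 + INR L * INR L * (2 * d) <= a ->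
  INR (length (col_list a)) <= ncount H s A + AstarA_count d.
Proof.
  intros Hs Ha Hd Hc. destruct (counting_list_spec A Astar s A_admissible Hs) as [E [O [G P]]]. rewrite E.
  destruct (col_list_spec a Ha) as [OB [GB PB]].
  rewrite <- (length_AstarA_vectors d Hd), <- plus_INR, <- length_app. apply le_INR.
  destruct col_admissible as [HT [HaB _]].
  apply (length_le_of_separation X (counting_list A Astar s ++ AstarA_vectors d) (col_list a)
    (fun x => sqnorm Y (col x)) a).
  - intros x Hx. destruct (orth_to_app X _ _ x Hx) as [h1 h2]. pose proof (P x h1).
    pose proof (sqnorm_A_near_col d x Hd h2) as Hnear. apply Rabs_le_between in Hnear.
    pose proof (sqnorm_ge0 X x).
    assert ((s ^ 2 + INR L * INR L * (2 * d)) * sqnorm X x <= a * sqnorm X x) by (apply Rmult_le_compat_r; auto). nra.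
  - apply orthonormal_indep; auto.
  - intros x Hx _ Hn. apply (sqnorm_apply_gt_on_span X Y (hilbert_definite H) col col_adj HT HaB a Ha _ OB GB x Hx Hn).
Qed.

Lemma col_le_ncount_sum s1 a d : 0 < s1 -> 0 < a -> 0 < d -> s1 ^ 2 + INR L * INR L * (2 * d) <= a ->
  INR (length (col_list a)) <= rsum L (fun k => ncount H s1 (Ak k)) + AAstar_count d.
Proof.
  intros Hs Ha Hd Hc. destruct (col_list_spec a Ha) as [OB [GB PB]].
  rewrite <- (length_AAstar_vectors d Hd), <- (length_col_adj_list s1 Hs), <- plus_INR, <- length_app.
  apply le_INR. apply (Nat.le_trans _ (length (map col (col_list a)))). rewrite length_map; apply le_n.
  destruct col_admissible as [HT [HaB _]].
  apply (length_le_of_separation Y (col_adj_list s1 ++ AAstar_vectors d) (map col (col_list a))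
    (fun y => sqnorm X (col_adj y)) a).
  - intros y Hy. destruct (orth_to_app Y _ _ y Hy) as [h1 h2].
    pose proof (sqnorm_col_adj_near_sum d y Hd h2) as Hnear. apply Rabs_le_between in Hnear.
    assert (rsum L (fun k => sqnorm X (Aks k (y k))) <= s1 ^ 2 * sqnorm Y y).
    { rewrite dirsum_sqnorm, <- rsum_scal. apply rsum_le. intros k Hk.
      destruct (Akstar_list_spec k s1 Hk Hs) as [_ [_ [_ P]]]. apply P, orth_col_adj_list; auto. }
    pose proof (sqnorm_ge0 Y y).
    assert ((s1 ^ 2 + INR L * INR L * (2 * d)) * sqnorm Y y <= a * sqnorm Y y) by (apply Rmult_le_compat_r; auto).
    simpl in *. nra.
  - apply (image_indep X Y col col_adj HT HaB a Ha _ OB GB).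
  - intros y Hy _ Hn. apply (sqnorm_adj_gt_on_image_span X Y (hilbert_definite H) col col_adj HT HaB a Ha _ OB GB y Hy Hn).
Qed.

Lemma sum_sqnorm_Akstar_gt s1 (y : Y) : 0 < s1 -> in_span Y (col_adj_list s1) y -> sqnorm Y y <> 0 ->
  s1 ^ 2 * sqnorm Y y < rsum L (fun k => sqnorm X (Aks k (y k))).
Proof.
  intros Hs Hy Hn.
  set (t := fun k => sqnorm X (Aks k (y k)) - s1 ^ 2 * sqnorm X (y k)).
  assert (Ht : forall k, (k < L)%nat -> 0 <= t k /\ (t k = 0 -> sqnorm X (y k) = 0)).
  { intros k Hk. unfold t. destruct (Akstar_list_spec k s1 Hk Hs) as [_ [O [G _]]].
    destruct (Akstar_admissible k Hk) as [HTk [Hak _]].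
    destruct (Req_dec (sqnorm X (y k)) 0) as [Z|NZ].
    - rewrite Z, (hilbert_definite H (y k) Z), (linear_0 X X (Aks k) HTk), sqnorm_0. split; intros; lra.
    - pose proof (sqnorm_apply_gt_on_span X X (hilbert_definite H) (Aks k) (Ak k) HTk Hak (s1 ^ 2)
        (pow_lt s1 2 Hs) _ O G (y k) (span_col_adj_list s1 y Hy k Hk) NZ). split; intros; lra. }
  assert (Hpos : 0 < rsum L t).
  { destruct (Rlt_le_dec 0 (rsum L t)) as [|Hle]; auto. exfalso. apply Hn.
    pose proof (rsum_zero_all L t (fun k Hk => proj1 (Ht k Hk)) Hle) as Z.
    rewrite dirsum_sqnorm, (rsum_ext L _ (fun _ => 0)), rsum_const. ring.
    intros k Hk. apply (proj2 (Ht k Hk)). apply Z; auto. }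
  unfold t in Hpos. rewrite rsum_minus, rsum_scal, <- (dirsum_sqnorm H L y) in Hpos. lra.
Qed.

Lemma ncount_sum_le_col s1 a d : 0 < s1 -> 0 < a -> 0 < d -> a + INR L * INR L * (2 * d) <= s1 ^ 2 ->
  rsum L (fun k => ncount H s1 (Ak k)) <= INR (length (col_list a)) + AAstar_count d.
Proof.
  intros Hs Ha Hd Hc. destruct (col_list_spec a Ha) as [OB [GB PB]].
  replace (INR (length (col_list a))) with (INR (length (map col (col_list a)))) by (rewrite length_map; reflexivity).
  rewrite <- (length_AAstar_vectors d Hd), <- (length_col_adj_list s1 Hs), <- plus_INR, <- length_app.
  apply le_INR.
  destruct col_admissible as [HT [HaB _]].
  apply (length_le_of_separation Y (map col (col_list a) ++ AAstar_vectors d) (col_adj_list s1)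
    (fun y => sqnorm X (col_adj y)) a).
  - intros y Hy. destruct (orth_to_app Y _ _ y Hy) as [h1 h2].
    apply (adj_bounded_on_image_orth X Y col col_adj HaB a Ha (col_list a) PB y h1).
  - apply orthonormal_indep, orthonormal_col_adj_list; auto.
  - intros y Hy Ho Hn. destruct (orth_to_app Y _ _ y Ho) as [h1 h2].
    pose proof (sqnorm_col_adj_near_sum d y Hd h2) as Hnear. apply Rabs_le_between in Hnear.
    pose proof (sum_sqnorm_Akstar_gt s1 y Hs Hy Hn). pose proof (sqnorm_ge0 Y y).
    assert ((a + INR L * INR L * (2 * d)) * sqnorm Y y <= s1 ^ 2 * sqnorm Y y) by (apply Rmult_le_compat_r; auto).
    simpl in *. nra.
Qed.

Lemma ncount_A_le_sum s s1 d : 0 < s -> 0 < s1 -> 0 < d -> s1 ^ 2 + INR L * INR L * (4 * d) <= s ^ 2 ->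
  ncount H s A <= rsum L (fun k => ncount H s1 (Ak k)) + AstarA_count d + AAstar_count d.
Proof.
  intros Hs Hs1 Hd Hc. set (a := s1 ^ 2 + INR L * INR L * (2 * d)).
  assert (Ha : 0 < a) by (unfold a; pose proof (pow_lt s1 2 Hs1); pose proof (pos_INR L); nra).
  pose proof (ncount_A_le_col s a d Hs Ha Hd ltac:(unfold a; lra)).
  pose proof (col_le_ncount_sum s1 a d Hs1 Ha Hd ltac:(unfold a; lra)). lra.
Qed.

Lemma ncount_sum_le_A s s1 d : 0 < s -> 0 < s1 -> 0 < d -> s ^ 2 + INR L * INR L * (4 * d) <= s1 ^ 2 ->
  rsum L (fun k => ncount H s1 (Ak k)) <= ncount H s A + AstarA_count d + AAstar_count d.
Proof.
  intros Hs Hs1 Hd Hc. set (a := s ^ 2 + INR L * INR L * (2 * d)).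
  assert (Ha : 0 < a) by (unfold a; pose proof (pow_lt s 2 Hs); pose proof (pos_INR L); nra).
  pose proof (col_le_ncount_A s a d Hs Ha Hd ltac:(unfold a; lra)).
  pose proof (ncount_sum_le_col s1 a d Hs1 Ha Hd ltac:(unfold a; lra)). lra.
Qed.

Lemma AstarA_count_ge0 t : 0 < t -> 0 <= AstarA_count t.
Proof.
  intros Ht. apply rsum_nonneg; intros k Hk; apply rsum_nonneg; intros j Hj; destruct (Nat.eqb_spec k j); try lra.
  apply (ncount_ge0 H (AstarA k j) (AstarA_adj k j)); auto. apply AstarA_admissible; auto.
Qed.

Lemma AAstar_count_ge0 t : 0 < t -> 0 <= AAstar_count t.
Proof.
  intros Ht. apply rsum_nonneg; intros k Hk; apply rsum_nonneg; intros j Hj; destruct (Nat.eqb_spec k j); try lra.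
  apply (ncount_ge0 H (AAstar k j) (AAstar_adj k j)); auto. apply AAstar_admissible; auto.
Qed.

Lemma rsum_ntilde s : rsum L (fun k => ntilde H s (Ak k)) = rsum L (fun k => ncount H s (Ak k)) + 2 * INR L.
Proof. unfold ntilde. rewrite rsum_plus, rsum_const. ring. Qed.

Lemma sum_ncount_ge0 s : 0 < s -> 0 <= rsum L (fun k => ncount H s (Ak k)).
Proof.
  intros Hs. apply rsum_nonneg. intros k Hk. apply (ncount_ge0 H (Ak k) (Aks k)); auto.
  apply Ak_admissible; auto.
Qed.

Lemma ncount_A_ge0 s : 0 < s -> 0 <= ncount H s A.
Proof. intros Hs. apply (ncount_ge0 H A Astar); auto. apply A_admissible. Qed.

Definition cross_factor t := INR L * (1 + AstarA_count t + AAstar_count t).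

Lemma ntilde_A_le_sum s s1 d : 0 < s -> 0 < s1 -> 0 < d -> s1 ^ 2 + INR L * INR L * (4 * d) <= s ^ 2 ->
  ntilde H s A <= rsum L (fun k => ntilde H s1 (Ak k)) * cross_factor d.
Proof.
  intros Hs Hs1 Hd Hc. pose proof (ncount_A_le_sum s s1 d Hs Hs1 Hd Hc).
  pose proof (AstarA_count_ge0 d Hd). pose proof (AAstar_count_ge0 d Hd).
  pose proof (sum_ncount_ge0 s1 Hs1). pose proof INR_L_ge1.
  rewrite rsum_ntilde. unfold ntilde, cross_factor.
  set (S1 := rsum L (fun k => ncount H s1 (Ak k))) in *.
  set (E1 := AstarA_count d) in *. set (E2 := AAstar_count d) in *.
  assert (Hf : 1 + E1 + E2 <= INR L * (1 + E1 + E2)) by nra.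
  assert ((S1 + 2 * INR L) * (1 + E1 + E2) <= (S1 + 2 * INR L) * (INR L * (1 + E1 + E2)))
    by (apply Rmult_le_compat_l; lra).
  nra.
Qed.

Lemma sum_ntilde_le_A s s1 d : 0 < s -> 0 < s1 -> 0 < d -> s ^ 2 + INR L * INR L * (4 * d) <= s1 ^ 2 ->
  rsum L (fun k => ntilde H s1 (Ak k)) <= ntilde H s A * cross_factor d.
Proof.
  intros Hs Hs1 Hd Hc. pose proof (ncount_sum_le_A s s1 d Hs Hs1 Hd Hc).
  pose proof (AstarA_count_ge0 d Hd). pose proof (AAstar_count_ge0 d Hd).
  pose proof (ncount_A_ge0 s Hs). pose proof INR_L_ge1.
  rewrite rsum_ntilde. unfold ntilde, cross_factor.
  set (n := ncount H s A) in *.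
  set (E1 := AstarA_count d) in *. set (E2 := AAstar_count d) in *.
  assert (Hn : n <= n * INR L) by nra.
  assert (HE : E1 + E2 <= (n + 2) * INR L * (E1 + E2)) by nra.
  nra.
Qed.

Variable gamma : R.
Hypothesis Hgam : 0 < gamma.
Hypothesis HS : forall j k, (j < L)%nat -> (k < L)%nat -> j <> k ->
  Sigma0 H (2 * gamma) (fun x => Aks k (Ak j x)) /\ Sigma0 H (2 * gamma) (fun x => Ak k (Aks j x)).

Definition cross_counts_small e t0 := forall t, 0 < t < t0 -> forall k j, (k < L)%nat -> (j < L)%nat ->
  k <> j ->
  ln (ncount H t (AstarA k j) + 1) <= e * Rpower t (- / (2 * gamma)) /\
  ln (ncount H t (AAstar k j) + 1) <= e * Rpower t (- / (2 * gamma)).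

Lemma cross_counts_small_near0 e : 0 < e -> exists t0, 0 < t0 /\ cross_counts_small e t0.
Proof.
  intros He.
  set (Q := fun k t0 => forall t, 0 < t < t0 -> forall j, (j < L)%nat -> k <> j ->
    ln (ncount H t (AstarA k j) + 1) <= e * Rpower t (- / (2 * gamma)) /\
    ln (ncount H t (AAstar k j) + 1) <= e * Rpower t (- / (2 * gamma))).
  destruct (uniform_threshold Q L) as [t0 [Ht0 Hq]].
  - intros k Hk.
    set (Qj := fun j t0 => k <> j -> forall t, 0 < t < t0 ->
      ln (ncount H t (AstarA k j) + 1) <= e * Rpower t (- / (2 * gamma)) /\
      ln (ncount H t (AAstar k j) + 1) <= e * Rpower t (- / (2 * gamma))).
    destruct (uniform_threshold Qj L) as [t1 [Ht1 Hq1]].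
    + intros j Hj. destruct (Nat.eq_dec k j) as [Ekj|Nkj].
      * exists 1. split. lra. intro; contradiction.
      * destruct (HS j k Hj Hk (not_eq_sym Nkj)) as [S1 _]. destruct (HS k j Hk Hj Nkj) as [_ S2].
        destruct (log_ncount_small_of_Sigma0 H (AstarA k j) (AstarA_adj k j) (2 * gamma)
          (AstarA_admissible k j Hk Hj) ltac:(lra) S1 e He) as [ta [Hta Pa]].
        destruct (log_ncount_small_of_Sigma0 H (AAstar k j) (AAstar_adj k j) (2 * gamma)
          (AAstar_admissible k j Hk Hj) ltac:(lra) S2 e He) as [tb [Htb Pb]].
        exists (Rmin ta tb). split. apply Rmin_pos; auto. intros _ t Ht.
        pose proof (Rmin_l ta tb). pose proof (Rmin_r ta tb).
        split. apply Pa; lra. apply Pb; lra.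
    + intros j t t' Ht' Htt HQ Hkj t2 Ht2. apply HQ; auto. lra.
    + exists t1. split; auto. intros t Ht j Hj Hkj. apply (Hq1 j Hj Hkj t Ht).
  - intros k t t' Ht' Htt HQ t2 Ht2. apply HQ. lra.
  - exists t0. split; auto. intros t Ht k j Hk Hj Hkj. apply (Hq k Hk t Ht j Hj Hkj).
Qed.

Lemma ncount_le_of_log T Ts t e R0 : admissible X X T Ts -> 0 < t ->
  ln (ncount H t T + 1) <= e * R0 -> ncount H t T <= exp (e * R0) - 1.
Proof.
  intros HG Ht Hl. pose proof (ncount_ge0 H T Ts t HG Ht).
  apply exp_le_mono in Hl. rewrite exp_ln in Hl by lra. lra.
Qed.

Lemma ln_cross_factor_le e : 0 < e -> exists t0, 0 < t0 /\ forall t, 0 < t < t0 ->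
  ln (cross_factor t) <= ln (2 * INR L ^ 3) + e * Rpower t (- / (2 * gamma)).
Proof.
  intros He. destruct (cross_counts_small_near0 e He) as [t0 [Ht0 HP]]. exists t0. split; auto.
  intros t Ht. set (Q := exp (e * Rpower t (- / (2 * gamma)))).
  assert (HQ : 1 <= Q).
  { unfold Q. rewrite <- exp_0. apply exp_le_mono. pose proof (Rpower_gt0 t (- / (2 * gamma))). nra. }
  assert (E1 : AstarA_count t <= INR L * (INR L * (Q - 1))).
  { unfold AstarA_count. rewrite <- !rsum_const. apply rsum_le. intros k Hk. apply rsum_le. intros j Hj.
    destruct (Nat.eqb_spec k j). lra.
    apply (ncount_le_of_log (AstarA k j) (AstarA_adj k j)). apply AstarA_admissible; auto. lra.
    apply (HP t Ht k j Hk Hj n). }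
  assert (E2 : AAstar_count t <= INR L * (INR L * (Q - 1))).
  { unfold AAstar_count. rewrite <- !rsum_const. apply rsum_le. intros k Hk. apply rsum_le. intros j Hj.
    destruct (Nat.eqb_spec k j). lra.
    apply (ncount_le_of_log (AAstar k j) (AAstar_adj k j)). apply AAstar_admissible; auto. lra.
    apply (HP t Ht k j Hk Hj n). }
  pose proof INR_L_ge1. pose proof (AstarA_count_ge0 t (proj1 Ht)).
  pose proof (AAstar_count_ge0 t (proj1 Ht)).
  rewrite <- (ln_exp (e * _)). fold Q. apply ln_le_add_of_le_mul.
  - unfold cross_factor. nra.
  - simpl. nra.
  - unfold Q. apply exp_pos.
  - unfold cross_factor. simpl.
    assert (1 + AstarA_count t + AAstar_count t <= 2 * INR L * INR L * Q) by nra. nra.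
Qed.

Lemma scaled_ln_cross_factor_small eta eps : 0 < eta -> 0 < eps -> exists d, 0 < d /\ forall s, 0 < s < d ->
  Rpower s (/ gamma) * ln (cross_factor (eta * s ^ 2)) <= eps.
Proof.
  intros Heta Heps. pose proof INR_L_ge1.
  apply (scaled_bound_small (fun t => ln (cross_factor t)) gamma eta (ln (2 * INR L ^ 3))); auto.
  - rewrite <- ln_1. apply ln_le. lra. simpl. nra.
  - apply ln_cross_factor_le.
Qed.

Let logcount_A s := Rpower s (/ gamma) * ln (ntilde H s A).
Let logcount_sum s := Rpower s (/ gamma) * ln (rsum L (fun k => ntilde H s (Ak k))).

Lemma logcount_A_ge0 s : 0 < s -> 0 <= logcount_A s.
Proof.
  intros Hs. unfold logcount_A, ntilde. pose proof (ncount_A_ge0 s Hs). pose proof (Rpower_gt0 s (/ gamma)).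
  assert (0 <= ln (ncount H s A + 2)) by (rewrite <- ln_1; apply ln_le; lra). nra.
Qed.

Lemma logcount_sum_ge0 s : 0 < s -> 0 <= logcount_sum s.
Proof.
  intros Hs. unfold logcount_sum. rewrite rsum_ntilde.
  pose proof (sum_ncount_ge0 s Hs). pose proof (Rpower_gt0 s (/ gamma)). pose proof INR_L_ge1.
  assert (0 <= ln (rsum L (fun k => ncount H s (Ak k)) + 2 * INR L)) by (rewrite <- ln_1; apply ln_le; lra).
  nra.
Qed.

Lemma sum_ntilde_gt0 s : 0 < s -> 0 < rsum L (fun k => ntilde H s (Ak k)).
Proof. intros Hs. rewrite rsum_ntilde. pose proof (sum_ncount_ge0 s Hs). pose proof INR_L_ge1. lra. Qed.

Lemma cross_factor_gt0 t : 0 < t -> 0 < cross_factor t.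
Proof.
  intros Ht. unfold cross_factor. pose proof INR_L_ge1.
  pose proof (AstarA_count_ge0 t Ht). pose proof (AAstar_count_ge0 t Ht). nra.
Qed.

(* [kappa s] with [kappa = (1+eps)^(-gamma)] and [d = eta s^2] satisfy the hypothesis of
   [ntilde_A_le_sum] exactly, and [s^(1/gamma) = (1+eps) (kappa s)^(1/gamma)]. *)
Lemma logcount_A_dominated : dilation_dominated logcount_A logcount_sum.
Proof.
  intros eps Heps.
  set (kap := Rpower (1 + eps) (- gamma)).
  assert (Hk0 : 0 < kap) by apply Rpower_gt0.
  assert (Hk1 : kap < 1).
  { apply Rlt_le_trans with (Rpower (1 + eps) 0). apply Rpower_lt; lra. rewrite Rpower_O; lra. }
  assert (Hkg : Rpower kap (/ gamma) = / (1 + eps)).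
  { unfold kap. rewrite Rpower_mult. replace (- gamma * / gamma) with (Ropp 1) by (field; lra).
    rewrite Rpower_Ropp, Rpower_1; lra. }
  pose proof INR_L_ge1.
  set (eta := (1 - kap ^ 2) / (4 * (INR L * INR L))).
  assert (Heta : 0 < eta) by (unfold eta; apply Rdiv_lt_0_compat; simpl; nra).
  destruct (scaled_ln_cross_factor_small eta eps Heta Heps) as [d [Hd Herr]].
  exists kap. split; auto. exists d. split; auto. intros s Hs.
  assert (Hdl : 0 < eta * s ^ 2) by (apply Rmult_lt_0_compat; auto; apply pow_lt; lra).
  assert (Hks : 0 < kap * s) by nra.
  pose proof (ntilde_A_le_sum s (kap * s) (eta * s ^ 2) ltac:(lra) Hks Hdl
    ltac:(unfold eta; right; field; nra)) as Hle.
  pose proof (Herr s Hs) as Er.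
  assert (Hsp : Rpower s (/ gamma) = (1 + eps) * Rpower (kap * s) (/ gamma)).
  { rewrite <- Rpower_mult_distr, Hkg by lra. field. lra. }
  assert (HN : 0 < ntilde H s A) by (unfold ntilde; pose proof (ncount_A_ge0 s (proj1 Hs)); lra).
  pose proof (ln_le_add_of_le_mul _ _ _ HN (sum_ntilde_gt0 _ Hks) (cross_factor_gt0 _ Hdl) Hle) as Hln.
  unfold logcount_A, logcount_sum.
  pose proof (Rpower_gt0 s (/ gamma)).
  apply (Rmult_le_compat_l (Rpower s (/ gamma))) in Hln; [|lra].
  rewrite Rmult_plus_distr_l in Hln. rewrite Hsp in Hln, Er |- *. nra.
Qed.

Lemma logcount_sum_dominated : dilation_dominated logcount_sum logcount_A.
Proof.
  intros eps Heps.
  set (kap := Rpower (1 + eps) gamma).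
  assert (Hk1 : 1 < kap).
  { apply Rle_lt_trans with (Rpower (1 + eps) 0). rewrite Rpower_O; lra. apply Rpower_lt; lra. }
  assert (Hkg : Rpower kap (/ gamma) = 1 + eps) by (unfold kap; apply Rpower_Rpower_inv; lra).
  pose proof INR_L_ge1.
  set (eta := (kap ^ 2 - 1) / (4 * (INR L * INR L))).
  assert (Heta : 0 < eta) by (unfold eta; apply Rdiv_lt_0_compat; simpl; nra).
  destruct (scaled_ln_cross_factor_small eta eps Heta Heps) as [d [Hd Herr]].
  exists (/ kap). split. apply Rinv_0_lt_compat; lra. exists (kap * d). split. nra.
  intros sg Hsg. set (s := / kap * sg).
  assert (Hs : 0 < s < d).
  { unfold s. split. apply Rmult_lt_0_compat; try lra. apply Rinv_0_lt_compat; lra.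
    apply (Rmult_lt_reg_l kap). lra. rewrite <- Rmult_assoc, Rinv_r, Rmult_1_l by lra. lra. }
  assert (Esg : sg = kap * s) by (unfold s; field; lra).
  assert (Hdl : 0 < eta * s ^ 2) by (apply Rmult_lt_0_compat; auto; apply pow_lt; lra).
  pose proof (sum_ntilde_le_A s sg (eta * s ^ 2) ltac:(lra) ltac:(lra) Hdl
    ltac:(rewrite Esg; unfold eta; right; field; nra)) as Hle.
  pose proof (Herr s Hs) as Er.
  assert (Hsp : Rpower sg (/ gamma) = (1 + eps) * Rpower s (/ gamma)).
  { rewrite Esg, <- Rpower_mult_distr, Hkg by lra. auto. }
  assert (HN : 0 < ntilde H s A) by (unfold ntilde; pose proof (ncount_A_ge0 s (proj1 Hs)); lra).
  pose proof (ln_le_add_of_le_mul _ _ _ (sum_ntilde_gt0 sg ltac:(lra)) HN (cross_factor_gt0 _ Hdl) Hle) as Hln.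
  unfold logcount_A, logcount_sum. fold s.
  pose proof (Rpower_gt0 s (/ gamma)).
  rewrite Hsp, Rmult_assoc. apply Rmult_le_compat_l. lra.
  apply (Rmult_le_compat_l (Rpower s (/ gamma))) in Hln; [|lra].
  rewrite Rmult_plus_distr_l in Hln. lra.
Qed.

End Decomposition.

Theorem proposition1p4 (H : Hilbert) (gamma : R) (L : nat)
  (A : H -> H) (Ak Akstar : nat -> H -> H) :
  0 < gamma -> (1 <= L)%nat ->
  is_compact_op H A ->
  (forall k, (k < L)%nat -> is_compact_op H (Ak k)) ->
  (forall k, (k < L)%nat -> is_adjoint H (Ak k) (Akstar k)) ->
  (forall x, A x = hsum H L (fun k => Ak k x)) ->
  (forall j k, (j < L)%nat -> (k < L)%nat -> j <> k ->
     Sigma0 H (2 * gamma) (fun x => Akstar k (Ak j x)) /\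
     Sigma0 H (2 * gamma) (fun x => Ak k (Akstar j x))) ->
  Delta_gamma H gamma A =
    limsup0 (fun s => Rpower s (/ gamma) * ln (rsum L (fun k => ntilde H s (Ak k)))) /\
  delta_gamma H gamma A =
    liminf0 (fun s => Rpower s (/ gamma) * ln (rsum L (fun k => ntilde H s (Ak k)))).
Proof.
  intros Hgamma HL HA HAk HAdj HAsum Hcross.
  apply limsup0_liminf0_eq.
  - eapply logcount_A_ge0; eauto.
  - eapply logcount_sum_ge0; eauto.
  - eapply logcount_A_dominated; eauto.
  - eapply logcount_sum_dominated; eauto.
Qed.
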